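(* Let $(v,L)$ be a (sufficiently regular) solution on $(t_0,t_1)\times\mathbb T^3$ of the system \[ \begin{aligned} \partial_t v^i&=-\frac{\alpha(1-3K)}{t}v^i - \frac{K}{1+K}t^{-\alpha}(1-|v|^2)\partial_i L-t^{-\alpha}v^j\partial_j v^i +t^{-\alpha}\Big(1-\frac{1-K}{1-K|v|^2}\Big)v^i\partial_j v^j\\ &\quad+t^{-\alpha}\frac{1-K}{1+K}\Big(1-\frac{1-K}{1-K|v|^2}\Big)v^i v^j\partial_j L +\frac{\alpha(1-3K)}{t}\frac{1-K}{1-K|v|^2}|v|^2 v^i,\\ \partial_tL&=-t^{-\alpha}\frac{1+K}{1-K|v|^2}\partial_j v^j-t^{-\alpha}\frac{1-K}{1-K|v|^2} v^j\partial_j L+\frac{\alpha(1+K)}{t}\frac{1-3K}{1-K|v|^2}|v|^2 . \end{aligned} \] Then \[ \begin{aligned} \partial_t\Big(\frac12\int \partial_i v^j\partial^iv_j \Big) &=-\frac{\alpha(1-3K)}{t}\int \partial_i v^j\partial^iv_j -\frac{K}{1+K}t^{-\alpha}\int \partial_i v^j(1-|v|^2)\partial^i\partial_j L \\ &\quad+t^{-\alpha}\int \partial^iv_j\Big(1-\frac{1-K}{1-K|v|^2}\Big)v^j \partial_i\partial_kv^k \\ &\quad+t^{-\alpha}\frac{1-K}{1+K}\int \partial^i v_j\Big(1-\frac{1-K}{1-K|v|^2}\Big)v^j v^k\partial_i\partial_k L +f(t), \end{aligned} \] where $f(t)$ is a perturbative term.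
   Context: Standing assumptions: $\alpha>0$ and $0\le K\le1/3$ constants, $t>1$, $|v|<1/10$. $\int$ denotes $\int_{\mathbb T^3}\cdot\,d^3x$ over the standard flat torus; indices raised/lowered with $\delta$, repeated indices summed, $|v|^2=\delta_{ij}v^iv^j$; $D$ is the spatial gradient. A function $f(t)$ is called perturbative if $|f(t)|\le C\frac{1+t^{1-\alpha}}{t}p(\|DL\|_{L^2},\|Dv\|_{L^2},\|v\|_{L^\infty},\|Dv\|_{L^\infty})$ for a constant $C$ and a polynomial $p$ whose lowest-order terms have degree at least 3. *)

From Stdlib Require Import Reals List.
From Coquelicot Require Import Coquelicot.
Open Scope R_scope.

(* A scalar field on (time) x (space R^3): F t x1 x2 x3.
   Directions: 0 = time, 1,2,3 = spatial x1,x2,x3. *)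
Definition field := R -> R -> R -> R -> R.

Definition pd (k : nat) (F : field) : field :=
  fun t x y z =>
    match k with
    | 0 => Derive (fun s => F s x y z) t
    | 1 => Derive (fun s => F t s y z) x
    | 2 => Derive (fun s => F t x s z) y
    | _ => Derive (fun s => F t x y s) z
    end.

Definition ex_pd (k : nat) (F : field) (t x y z : R) : Prop :=
  match k with
  | 0 => ex_derive (fun s => F s x y z) t
  | 1 => ex_derive (fun s => F t s y z) x
  | 2 => ex_derive (fun s => F t x s z) y
  | _ => ex_derive (fun s => F t x y s) z
  end.

Definition dx (i : nat) (F : field) : field := pd (S i) F.

Definition iterd (ds : list nat) (F : field) : field := fold_right pd F ds.

Definition smooth_on (t0 t1 : R) (F : field) : Prop :=
  forall ds : list nat, (forall d, In d ds -> (d < 4)%nat) ->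
  forall t x y z, t0 < t < t1 ->
    (forall k, (k < 4)%nat -> ex_pd k (iterd ds F) t x y z) /\
    continuous (fun p : R * R * R * R =>
                  iterd ds F (fst (fst (fst p))) (snd (fst (fst p)))
                             (snd (fst p)) (snd p)) (t, x, y, z).

(* 1-periodic in each spatial variable: a field on the flat torus T^3 *)
Definition periodic (F : field) : Prop :=
  forall t x y z, F t (x + 1) y z = F t x y z /\ F t x (y + 1) z = F t x y z
                  /\ F t x y (z + 1) = F t x y z.

Definition sum3 (f : nat -> R) : R := f 0%nat + f 1%nat + f 2%nat.

Definition int3 (g : R -> R -> R -> R) : R :=
  RInt (fun x => RInt (fun y => RInt (fun z => g x y z) 0 1) 0 1) 0 1.

Definition vfield := nat -> field.

Definition vsq (v : vfield) (t x y z : R) : R :=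
  sum3 (fun j => v j t x y z ^ 2).

Definition Dvsq (v : vfield) (t x y z : R) : R :=
  sum3 (fun i => sum3 (fun j => dx i (v j) t x y z ^ 2)).

Definition DLsq (L : field) (t x y z : R) : R :=
  sum3 (fun i => dx i L t x y z ^ 2).

Definition L2_DL (L : field) (t : R) : R := sqrt (int3 (DLsq L t)).
Definition L2_Dv (v : vfield) (t : R) : R := sqrt (int3 (Dvsq v t)).
Definition sup3 (g : R -> R -> R -> R) : R :=
  real (Lub_Rbar (fun r => exists x y z, r = g x y z)).
Definition Linf_v (v : vfield) (t : R) : R := sup3 (fun x y z => sqrt (vsq v t x y z)).
Definition Linf_Dv (v : vfield) (t : R) : R := sup3 (fun x y z => sqrt (Dvsq v t x y z)).

(* a polynomial in 4 variables, as a list of (coefficient, exponents) *)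
Definition poly4 := list (R * (nat * nat * nat * nat)).

Definition eval4 (p : poly4) (a b c d : R) : R :=
  fold_right (fun m acc =>
    match m with (co, (e1, e2, e3, e4)) => co * a ^ e1 * b ^ e2 * c ^ e3 * d ^ e4 + acc end)
    0 p.

Definition lowdeg_ge3 (p : poly4) : Prop :=
  List.Forall (fun m => match m with (_, (e1, e2, e3, e4)) => (3 <= e1 + e2 + e3 + e4)%nat end) p.

Definition is_solution (al K t0 t1 : R) (v : vfield) (L : field) : Prop :=
  forall t x y z, t0 < t < t1 ->
  let w := vsq v t x y z in
  let ta := Rpower t (- al) in
  let Q := (1 - K) / (1 - K * w) in
  (forall i, (i < 3)%nat ->
    pd 0 (v i) t x y z =
      - (al * (1 - 3 * K) / t) * v i t x y z
      - K / (1 + K) * ta * (1 - w) * dx i L t x y z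
      - ta * sum3 (fun j => v j t x y z * dx j (v i) t x y z)
      + ta * (1 - Q) * v i t x y z * sum3 (fun j => dx j (v j) t x y z)
      + ta * ((1 - K) / (1 + K)) * (1 - Q) * v i t x y z
          * sum3 (fun j => v j t x y z * dx j L t x y z)
      + al * (1 - 3 * K) / t * Q * w * v i t x y z) /\
  pd 0 L t x y z =
      - ta * ((1 + K) / (1 - K * w)) * sum3 (fun j => dx j (v j) t x y z)
      - ta * Q * sum3 (fun j => v j t x y z * dx j L t x y z)
      + al * (1 + K) / t * ((1 - 3 * K) / (1 - K * w)) * w.

Definition energy (v : vfield) (t : R) : R := / 2 * int3 (Dvsq v t).

Definition rhs_terms (al K : R) (v : vfield) (L : field) (t : R) : R :=
  let ta := Rpower t (- al) in
  let Q x y z := (1 - K) / (1 - K * vsq v t x y z) in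
  - (al * (1 - 3 * K) / t) * int3 (Dvsq v t)
  - K / (1 + K) * ta * int3 (fun x y z =>
      sum3 (fun i => sum3 (fun j =>
        dx i (v j) t x y z * (1 - vsq v t x y z) * dx i (dx j L) t x y z)))
  + ta * int3 (fun x y z =>
      sum3 (fun i => sum3 (fun j => sum3 (fun k =>
        dx i (v j) t x y z * (1 - Q x y z) * v j t x y z
          * dx i (dx k (v k)) t x y z))))
  + ta * ((1 - K) / (1 + K)) * int3 (fun x y z =>
      sum3 (fun i => sum3 (fun j => sum3 (fun k =>
        dx i (v j) t x y z * (1 - Q x y z) * v j t x y z * v k t x y z
          * dx i (dx k L) t x y z)))).

(* Differentiating under the integral and commuting [d_t] with [d_i] (Schwarz),
   [d_t (1/2 |Dv|^2) = d_i v^j d_i (d_t v^j)], and [d_i] of the right-hand side of the velocity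
   equation splits into the four terms of the statement, the transport term
   [- t^-al v^k d_k d_i v^j], and terms without second derivatives.  Since
   [d_i v^j v^k d_k d_i v^j = v^k d_k (|Dv|^2 / 2)], periodic integration by parts turns the transport
   term into [t^-al / 2 int (div v) |Dv|^2].  Everything left is pointwise at least cubic in
   [Dv], [DL], [v], with bounded coefficients (as [|v| < 1/10] and [K <= 1/3]) and weight [t^-al]
   or [al (1 - 3K) / t], both bounded by [(1 + al) (1 + t^(1-al)) / t] because
   [t^-al + 1/t = (1 + t^(1-al)) / t].  Bounding [Dv] and [v] by their sup norms and [|Dv| |DL|]
   by AM-GM gives
   [p = |Dv|_oo^3 + |Dv|_2^2 |Dv|_oo + |DL|_2^2 |Dv|_oo + |v|_oo |Dv|_oo^2]. *)

From Stdlib Require Import Reals List Lra Lia Classical ClassicalEpsilon ZArith.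
From Coquelicot Require Import Coquelicot.
Open Scope R_scope.

Lemma sum3_ge0 (f : nat -> R) : (forall i, (i < 3)%nat -> 0 <= f i) -> 0 <= sum3 f.
Proof.
  intros H. unfold sum3.
  pose proof (H 0%nat ltac:(lia)). pose proof (H 1%nat ltac:(lia)). pose proof (H 2%nat ltac:(lia)).
  lra.
Qed.

Lemma le_sum3 (f : nat -> R) i : (forall k, (k < 3)%nat -> 0 <= f k) -> (i < 3)%nat -> f i <= sum3 f.
Proof.
  intros H Hi. unfold sum3.
  pose proof (H 0%nat ltac:(lia)). pose proof (H 1%nat ltac:(lia)). pose proof (H 2%nat ltac:(lia)).
  destruct i as [|[|[|i]]]; try lia; lra.
Qed.

Lemma sqr_le_sum3 (f : nat -> R) i : (i < 3)%nat -> f i ^ 2 <= sum3 (fun k => f k ^ 2).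
Proof. intros Hi. apply (le_sum3 (fun k => f k ^ 2)); auto. intros; apply pow2_ge_0. Qed.

Lemma sum3_const (c : R) : sum3 (fun _ => c) = 3 * c.
Proof. unfold sum3. ring. Qed.

Lemma sum3_abs_le (f g : nat -> R) : (forall i, (i < 3)%nat -> Rabs (f i) <= g i) ->
  Rabs (sum3 f) <= sum3 g.
Proof.
  intros H. unfold sum3.
  eapply Rle_trans; [apply Rabs_triang|]. apply Rplus_le_compat; [|apply H; lia].
  eapply Rle_trans; [apply Rabs_triang|]. apply Rplus_le_compat; apply H; lia.
Qed.

Lemma is_derive_sum3 (F : nat -> R -> R) (dF : nat -> R) t :
  (forall i, (i < 3)%nat -> is_derive (F i) t (dF i)) ->
  is_derive (fun s => sum3 (fun i => F i s)) t (sum3 dF).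
Proof.
  intros H. unfold sum3.
  apply (is_derive_plus (fun s => F 0%nat s + F 1%nat s) (F 2%nat));
    [apply (is_derive_plus (F 0%nat) (F 1%nat)) |]; apply H; lia.
Qed.

Lemma is_derive_sqr (f : R -> R) (t d : R) : is_derive f t d ->
  is_derive (fun s => f s ^ 2) t (2 * f t * d).
Proof.
  intros H.
  apply is_derive_ext with (f := fun s => f s * f s); [intros s; simpl; ring|].
  replace (2 * f t * d) with (d * f t + f t * d) by ring. now apply Derive.is_derive_mult.
Qed.

Lemma Rabs_mult_le x y X Y : Rabs x <= X -> Rabs y <= Y -> Rabs (x * y) <= X * Y.
Proof. intros H1 H2. rewrite Rabs_mult. apply Rmult_le_compat; auto using Rabs_pos. Qed.

Lemma Rabs_plus_le x y X Y : Rabs x <= X -> Rabs y <= Y -> Rabs (x + y) <= X + Y.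
Proof. intros H1 H2. eapply Rle_trans; [apply Rabs_triang | lra]. Qed.

Lemma Rabs_le_sqrt a s : a ^ 2 <= s -> Rabs a <= sqrt s.
Proof. intros H. rewrite <- sqrt_Rsqr_abs. apply sqrt_le_1_alt. unfold Rsqr. nra. Qed.

Ltac Rabs_bound :=
  lazymatch goal with
  | |- Rabs (_ + _) <= _ => eapply Rabs_plus_le; Rabs_bound
  | |- Rabs (_ * _) <= _ => eapply Rabs_mult_le; Rabs_bound
  | |- Rabs _ <= _ => eassumption
  end.

Lemma continuous_pair {A B C : UniformSpace} (f : A -> B) (g : A -> C) (x : A) :
  continuous f x -> continuous g x -> continuous (fun a => (f a, g a)) x.
Proof.
  intros Hf Hg.
  apply (continuous_comp_2 f g (fun a b => (a, b))); auto.
  apply continuous_ext with (f := fun p : B * C => p); [intros [a b]; reflexivity|].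
  apply continuous_id.
Qed.

Lemma continuous_fst_comp {A B C : UniformSpace} (g : A -> B * C) (x : A) :
  continuous g x -> continuous (fun r => fst (g r)) x.
Proof.
  intros H. apply (continuous_comp g fst); auto.
  destruct (g x); apply continuous_fst.
Qed.

Lemma continuous_snd_comp {A B C : UniformSpace} (g : A -> B * C) (x : A) :
  continuous g x -> continuous (fun r => snd (g r)) x.
Proof.
  intros H. apply (continuous_comp g snd); auto.
  destruct (g x); apply continuous_snd.
Qed.

Ltac continuous_tuple :=
  repeat first [ apply continuous_const | apply continuous_id | apply continuous_pair
               | apply continuous_fst_comp | apply continuous_snd_comp ].

Section RealContinuity.
Context {U : UniformSpace} (f g : U -> R) (x : U).
Hypotheses (Hf : continuous f x) (Hg : continuous g x).

Lemma continuous_Rplus_fun : continuous (fun r => f r + g r) x.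
Proof. exact (@continuous_plus U R_AbsRing R_NormedModule f g x Hf Hg). Qed.

Lemma continuous_Rmult_fun : continuous (fun r => f r * g r) x.
Proof. exact (@continuous_mult U R_AbsRing f g x Hf Hg). Qed.

Lemma continuous_Ropp_fun : continuous (fun r => - f r) x.
Proof. exact (@continuous_opp U R_AbsRing R_NormedModule f x Hf). Qed.

Lemma continuous_Rminus_fun : continuous (fun r => f r - g r) x.
Proof. exact (@continuous_minus U R_AbsRing R_NormedModule f g x Hf Hg). Qed.

Lemma continuous_Rdiv_fun : g x <> 0 -> continuous (fun r => f r / g r) x.
Proof.
  intros Hg0. apply (@continuous_mult U R_AbsRing f (fun r => / g r) x Hf).
  apply (continuous_comp g Rinv); auto. now apply continuous_Rinv.
Qed.

Lemma continuous_pow_fun (n : nat) : continuous (fun r => f r ^ n) x.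
Proof.
  induction n as [|n IH]; [apply continuous_const|].
  apply (@continuous_mult U R_AbsRing f (fun r => f r ^ n) x Hf IH).
Qed.

Lemma continuous_sqrt_fun : continuous (fun r => sqrt (f r)) x.
Proof. apply (continuous_comp f sqrt); [exact Hf | apply continuous_sqrt]. Qed.

End RealContinuity.

Ltac continuity_with atom :=
  lazymatch goal with
  | |- continuous (fun _ => ?c) _ => apply continuous_const
  | |- continuous (fun q => sum3 _) _ => unfold sum3; continuity_with atom
  | |- continuous (fun q => @?f q + @?g q) _ =>
      apply (continuous_Rplus_fun f g); continuity_with atom
  | |- continuous (fun q => @?f q - @?g q) _ =>
      apply (continuous_Rminus_fun f g); continuity_with atom
  | |- continuous (fun q => - @?f q) _ =>
      apply (continuous_Ropp_fun f); continuity_with atom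
  | |- continuous (fun q => @?f q * @?g q) _ =>
      apply (continuous_Rmult_fun f g); continuity_with atom
  | |- continuous (fun q => @?f q / @?g q) _ =>
      apply (continuous_Rdiv_fun f g); [continuity_with atom | continuity_with atom | idtac]
  | |- continuous (fun q => @?f q ^ _) _ =>
      apply (continuous_pow_fun f); continuity_with atom
  | |- continuous (fun q => sqrt (@?f q)) _ =>
      apply (continuous_sqrt_fun f); continuity_with atom
  | |- _ => atom
  end.

Lemma locally_between {P : UniformSpace} (g : P -> R) (p : P) (a b : R) :
  continuous g p -> a < g p < b -> locally p (fun r => a < g r < b).
Proof.
  intros Hc Hab.
  assert (He : 0 < Rmin (g p - a) (b - g p)) by (apply Rmin_pos; lra).
  pose proof (proj1 (filterlim_locally g (g p)) Hc (mkposreal _ He)) as H.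
  eapply filter_imp; [|exact H]. intros r Hr.
  assert (Hd : Rabs (g r - g p) < Rmin (g p - a) (b - g p)) by exact Hr.
  apply Rabs_def2 in Hd.
  pose proof (Rmin_l (g p - a) (b - g p)). pose proof (Rmin_r (g p - a) (b - g p)). lra.
Qed.

(** * Integrals over [0, 1] and over the torus *)

Lemma ex_RInt_cont (f : R -> R) (a b : R) :
  (forall z, Rmin a b <= z <= Rmax a b -> continuous f z) -> ex_RInt f a b.
Proof. exact (@ex_RInt_continuous R_CompleteNormedModule f a b). Qed.

Lemma RInt01_const (c : R) : RInt (fun _ => c) 0 1 = c.
Proof. rewrite RInt_const. unfold scal; simpl. unfold mult; simpl. ring. Qed.

Lemma tube_lemma {P : UniformSpace} (h : P -> R -> R) (p : P) :
  (forall s, continuous (fun r : P * R => h (fst r) (snd r)) (p, s)) ->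
  forall eps : posreal, exists d : posreal, forall q, ball p d q ->
    forall s, 0 <= s <= 1 -> Rabs (h q s - h p s) < eps.
Proof.
  intros Hc eps.
  assert (Hd : forall s, {d : posreal | forall q s', ball p d q -> ball s d s' ->
                 Rabs (h q s' - h p s) < eps / 2}).
  { intros s. apply constructive_indefinite_description.
    destruct (proj1 (filterlim_locally _ _) (Hc s) (pos_div_2 eps)) as [d Hd].
    exists d. intros q s' Hq Hs'. apply (Hd (q, s')). split; assumption. }
  destruct (compactness_value_1d 0 1 (fun s => proj1_sig (Hd s))) as [d Hcd].
  exists d. intros q Hq s Hs.
  destruct (NNPP _ (Hcd s Hs)) as [t [_ [Hst Hdt]]].
  assert (Bq : ball p (proj1_sig (Hd t)) q) by (apply ball_le with d; auto).
  pose proof (proj2_sig (Hd t) q s Bq Hst) as E1.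
  pose proof (proj2_sig (Hd t) p s (ball_center p _) Hst) as E2.
  apply Rabs_def2 in E1. apply Rabs_def2 in E2. apply Rabs_def1; lra.
Qed.

Lemma continuous_RInt01_param {P : UniformSpace} (h : P -> R -> R) (p : P) :
  locally p (fun q => forall s, continuous (fun r : P * R => h (fst r) (snd r)) (q, s)) ->
  continuous (fun q => RInt (h q) 0 1) p.
Proof.
  intros Hloc.
  assert (Hslice : forall q s, (forall s, continuous (fun r : P * R => h (fst r) (snd r)) (q, s)) ->
                     continuous (h q) s).
  { intros q s Hq.
    apply (continuous_comp_2 (fun _ : R => q) (fun s' => s') h);
      [apply continuous_const | apply continuous_id | apply Hq]. }
  pose proof (locally_singleton _ _ Hloc) as Hp.
  apply filterlim_locally. intros eps.
  destruct (tube_lemma h p Hp (pos_div_2 eps)) as [d Hd].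
  assert (Hb : locally p (ball p d)) by (exists d; auto).
  eapply filter_imp; [| exact (filter_and _ _ Hloc Hb)].
  intros q [Hq Hbq].
  assert (Eq : ex_RInt (h q) 0 1) by (apply ex_RInt_cont; intros z _; auto).
  assert (Ep : ex_RInt (h p) 0 1) by (apply ex_RInt_cont; intros z _; auto).
  change (Rabs (RInt (h q) 0 1 - RInt (h p) 0 1) < eps).
  assert (Hm : RInt (fun s => h q s - h p s) 0 1 = RInt (h q) 0 1 - RInt (h p) 0 1)
    by exact (RInt_minus (h q) (h p) 0 1 Eq Ep).
  rewrite <- Hm.
  assert (Hle : norm (RInt (fun s => h q s - h p s) 0 1) <= (1 - 0) * (eps / 2)).
  { apply norm_RInt_le_const with (f := fun s => h q s - h p s); [lra | |].
    - intros s Hs. apply Rlt_le, (Hd q Hbq s Hs).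
    - apply (@RInt_correct R_CompleteNormedModule), (ex_RInt_minus (h q) (h p) 0 1 Eq Ep). }
  change (Rabs (RInt (fun s => h q s - h p s) 0 1) <= (1 - 0) * (eps / 2)) in Hle.
  destruct eps; simpl in *; lra.
Qed.

Lemma is_derive_RInt01_param (f df : R -> R -> R) (x : R) :
  locally x (fun u => forall s, is_derive (fun u' => f u' s) u (df u s)) ->
  (forall s, continuous (fun r : R * R => df (fst r) (snd r)) (x, s)) ->
  locally x (fun u => forall s, continuous (f u) s) ->
  is_derive (fun u => RInt (f u) 0 1) x (RInt (df x) 0 1).
Proof.
  intros Hd Hc Hf.
  replace (RInt (df x) 0 1) with (RInt (fun s => Derive (fun u => f u s) x) 0 1).
  2: { apply RInt_ext. intros s _. apply is_derive_unique, (locally_singleton _ _ Hd). }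
  apply (is_derive_RInt_param f 0 1 x).
  - eapply filter_imp; [| exact Hd]. intros u Hu s _. eexists. apply Hu.
  - intros s _. apply continuity_2d_pt_ext_loc with (f := df).
    + destruct Hd as [d Hd]. exists d. intros u v Hu _.
      symmetry. apply is_derive_unique, Hd, Hu.
    + apply continuity_2d_pt_filterlim, Hc.
  - eapply filter_imp; [| exact Hf]. intros u Hu. apply ex_RInt_cont. intros; apply Hu.
Qed.

Lemma RInt01_derive_periodic (f df : R -> R) :
  (forall s, is_derive f s (df s)) -> (forall s, continuous df s) -> f 1 = f 0 ->
  RInt df 0 1 = 0.
Proof.
  intros Hd Hc Hp. apply is_RInt_unique.
  pose proof (@is_RInt_derive R_CompleteNormedModule f df 0 1 (fun x _ => Hd x) (fun x _ => Hc x)) as H.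
  change (minus (f 1) (f 0)) with (f 1 - f 0) in H.
  rewrite Hp, Rminus_diag in H. exact H.
Qed.

Definition cont3 (g : R -> R -> R -> R) : Prop :=
  forall x y z, continuous (fun q : R * R * R => g (fst (fst q)) (snd (fst q)) (snd q)) (x, y, z).

Lemma cont3_fix_x (g : R -> R -> R -> R) x y z : cont3 g ->
  continuous (fun r : R * R => g x (fst r) (snd r)) (y, z).
Proof.
  intros Hg. apply (continuous_comp (fun r : R * R => (x, fst r, snd r))
    (fun q : R * R * R => g (fst (fst q)) (snd (fst q)) (snd q))); [continuous_tuple | apply Hg].
Qed.

Lemma cont3_fix_y (g : R -> R -> R -> R) x y z : cont3 g ->
  continuous (fun r : R * R => g (fst r) y (snd r)) (x, z).
Proof.
  intros Hg. apply (continuous_comp (fun r : R * R => (fst r, y, snd r))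
    (fun q : R * R * R => g (fst (fst q)) (snd (fst q)) (snd q))); [continuous_tuple | apply Hg].
Qed.

Lemma cont3_fix_xy (g : R -> R -> R -> R) x y z : cont3 g -> continuous (g x y) z.
Proof.
  intros Hg. apply (continuous_comp (fun r : R => (y, r)) (fun r : R * R => g x (fst r) (snd r)));
    [continuous_tuple | now apply cont3_fix_x].
Qed.

Section TorusIntegral.
Variable g : R -> R -> R -> R.
Hypothesis Hg : cont3 g.

Lemma continuous_RInt_z (x y : R) :
  continuous (fun q : R * R => RInt (fun z => g (fst q) (snd q) z) 0 1) (x, y).
Proof.
  apply (continuous_RInt01_param (fun q z => g (fst q) (snd q) z)).
  apply filter_forall. intros [a b] s. exact (Hg a b s).
Qed.

Lemma continuous_RInt_z_in_y x y :
  continuous (fun y => RInt (fun z => g x y z) 0 1) y.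
Proof.
  apply (continuous_comp (fun r : R => (x, r))
    (fun q : R * R => RInt (fun z => g (fst q) (snd q) z) 0 1));
    [continuous_tuple | apply continuous_RInt_z].
Qed.

Lemma continuous_RInt_yz (x : R) :
  continuous (fun x => RInt (fun y => RInt (fun z => g x y z) 0 1) 0 1) x.
Proof.
  apply (continuous_RInt01_param (fun x y => RInt (fun z => g x y z) 0 1)).
  apply filter_forall. intros a s. exact (continuous_RInt_z a s).
Qed.

Lemma ex_RInt_int3 :
  (forall x y, ex_RInt (fun z => g x y z) 0 1) /\
  (forall x, ex_RInt (fun y => RInt (fun z => g x y z) 0 1) 0 1) /\
  ex_RInt (fun x => RInt (fun y => RInt (fun z => g x y z) 0 1) 0 1) 0 1.
Proof.
  split; [|split]; [intros x y | intros x |]; apply ex_RInt_cont; intros s _.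
  - now apply cont3_fix_xy.
  - apply continuous_RInt_z_in_y.
  - apply continuous_RInt_yz.
Qed.

End TorusIntegral.

Lemma int3_ext (f g : R -> R -> R -> R) :
  (forall x y z, f x y z = g x y z) -> int3 f = int3 g.
Proof.
  intros H. unfold int3. apply RInt_ext; intros x _. apply RInt_ext; intros y _.
  apply RInt_ext; intros z _. apply H.
Qed.

Lemma RInt01_lin (f g : R -> R) (a b : R) :
  ex_RInt f 0 1 -> ex_RInt g 0 1 ->
  RInt (fun x => a * f x + b * g x) 0 1 = a * RInt f 0 1 + b * RInt g 0 1.
Proof.
  intros Hf Hg. apply is_RInt_unique.
  apply (@is_RInt_plus R_NormedModule);
    apply (@is_RInt_scal R_NormedModule), (@RInt_correct R_CompleteNormedModule); assumption.
Qed.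

Lemma int3_lin (f g : R -> R -> R -> R) (a b : R) : cont3 f -> cont3 g ->
  int3 (fun x y z => a * f x y z + b * g x y z) = a * int3 f + b * int3 g.
Proof.
  intros Hf Hg.
  destruct (ex_RInt_int3 f Hf) as [F1 [F2 F3]].
  destruct (ex_RInt_int3 g Hg) as [G1 [G2 G3]].
  unfold int3. rewrite <- RInt01_lin by assumption.
  apply RInt_ext; intros x _. rewrite <- RInt01_lin by auto.
  apply RInt_ext; intros y _. apply RInt01_lin; auto.
Qed.

Lemma int3_plus (f g : R -> R -> R -> R) : cont3 f -> cont3 g ->
  int3 (fun x y z => f x y z + g x y z) = int3 f + int3 g.
Proof.
  intros Hf Hg. rewrite <- (Rmult_1_l (int3 f)), <- (Rmult_1_l (int3 g)), <- int3_lin by auto.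
  apply int3_ext; intros; ring.
Qed.

Lemma int3_minus (f g : R -> R -> R -> R) : cont3 f -> cont3 g ->
  int3 (fun x y z => f x y z - g x y z) = int3 f - int3 g.
Proof.
  intros Hf Hg. replace (int3 f - int3 g) with (1 * int3 f + -1 * int3 g) by ring.
  rewrite <- int3_lin by auto. apply int3_ext; intros; ring.
Qed.

Lemma int3_scal (f : R -> R -> R -> R) (a : R) : cont3 f ->
  int3 (fun x y z => a * f x y z) = a * int3 f.
Proof.
  intros Hf. replace (a * int3 f) with (a * int3 f + 0 * int3 f) by ring.
  rewrite <- int3_lin by auto. apply int3_ext; intros; ring.
Qed.

Lemma int3_const (c : R) : int3 (fun _ _ _ => c) = c.
Proof.
  unfold int3. rewrite (RInt_ext _ (fun _ => c)); [apply RInt01_const|].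
  intros x _. rewrite (RInt_ext _ (fun _ => c)); [apply RInt01_const|]. intros y _. apply RInt01_const.
Qed.

Lemma int3_le (f g : R -> R -> R -> R) : cont3 f -> cont3 g ->
  (forall x y z, f x y z <= g x y z) -> int3 f <= int3 g.
Proof.
  intros Hf Hg H.
  destruct (ex_RInt_int3 f Hf) as [F1 [F2 F3]].
  destruct (ex_RInt_int3 g Hg) as [G1 [G2 G3]].
  unfold int3. apply RInt_le; auto; [lra|]. intros x _.
  apply RInt_le; auto; [lra|]. intros y _. apply RInt_le; auto. lra.
Qed.

Lemma int3_abs_le (f g : R -> R -> R -> R) : cont3 f -> cont3 g ->
  (forall x y z, Rabs (f x y z) <= g x y z) -> Rabs (int3 f) <= int3 g.
Proof.
  intros Hf Hg H. apply Rabs_le. split.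
  - assert (Hg' : cont3 (fun x y z => -1 * g x y z)).
    { intros x y z. apply (continuous_Rmult_fun (fun _ => -1)); [apply continuous_const | apply Hg]. }
    replace (- int3 g) with (-1 * int3 g) by ring. rewrite <- int3_scal by auto.
    apply int3_le; auto. intros x y z. specialize (H x y z). apply Rabs_le_between in H. lra.
  - apply int3_le; auto. intros x y z. specialize (H x y z). apply Rabs_le_between in H. lra.
Qed.

Lemma int3_ge0 (g : R -> R -> R -> R) : cont3 g -> (forall x y z, 0 <= g x y z) -> 0 <= int3 g.
Proof.
  intros Hg H. rewrite <- (int3_const 0). apply int3_le; auto.
  intros x y z. apply continuous_const.
Qed.

Lemma int3_sum3 (g : nat -> R -> R -> R -> R) : (forall k, (k < 3)%nat -> cont3 (g k)) ->
  int3 (fun x y z => sum3 (fun k => g k x y z)) = sum3 (fun k => int3 (g k)).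
Proof.
  intros Hg. unfold sum3.
  assert (H01 : cont3 (fun x y z => g 0%nat x y z + g 1%nat x y z)).
  { intros x y z. apply (continuous_Rplus_fun (fun q => g 0%nat _ _ _) (fun q => g 1%nat _ _ _));
      apply Hg; lia. }
  rewrite (int3_plus (fun x y z => g 0%nat x y z + g 1%nat x y z)), int3_plus; auto; apply Hg; lia.
Qed.

Definition at4 (F : field) (p : R * R * R * R) : R :=
  F (fst (fst (fst p))) (snd (fst (fst p))) (snd (fst p)) (snd p).

Definition cont_slab (t0 t1 : R) (F : field) : Prop :=
  forall t x y z, t0 < t < t1 -> continuous (at4 F) (t, x, y, z).

Lemma cont3_slice t0 t1 (F : field) t : cont_slab t0 t1 F -> t0 < t < t1 -> cont3 (F t).
Proof.
  intros HF Ht x y z.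
  apply (continuous_comp (fun q : R * R * R => (t, fst (fst q), snd (fst q), snd q)) (at4 F)).
  - continuous_tuple.
  - apply HF, Ht.
Qed.

Section TimeDerivative.
Variables t0 t1 : R.

Definition int_z (F : field) (q : R * R * R) : R :=
  RInt (fun z => F (fst (fst q)) (snd (fst q)) (snd q) z) 0 1.
Definition int_yz (F : field) (q : R * R) : R := RInt (fun y => int_z F (q, y)) 0 1.

Lemma continuous_int_z (F : field) (q : R * R * R) :
  cont_slab t0 t1 F -> t0 < fst (fst q) < t1 -> continuous (int_z F) q.
Proof.
  intros HF Hq.
  apply (continuous_RInt01_param (fun q z => F (fst (fst q)) (snd (fst q)) (snd q) z)).
  eapply filter_imp;
    [| apply (locally_between (fun r : R * R * R => fst (fst r))); [continuous_tuple | exact Hq]].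
  intros [[t x] y] Hr s. exact (HF t x y s Hr).
Qed.

Lemma continuous_int_yz (F : field) (q : R * R) :
  cont_slab t0 t1 F -> t0 < fst q < t1 -> continuous (int_yz F) q.
Proof.
  intros HF Hq.
  apply (continuous_RInt01_param (fun q y => int_z F (q, y))).
  eapply filter_imp;
    [| apply (locally_between (fun r : R * R => fst r)); [continuous_tuple | exact Hq]].
  intros [t x] Hr s.
  apply continuous_ext with (f := int_z F); [intros [a b]; reflexivity|].
  apply continuous_int_z; auto.
Qed.

Lemma is_derive_int3 (G H : field) t :
  t0 < t < t1 -> cont_slab t0 t1 G -> cont_slab t0 t1 H ->
  (forall s x y z, t0 < s < t1 -> is_derive (fun u => G u x y z) s (H s x y z)) ->
  is_derive (fun s => int3 (G s)) t (int3 (H t)).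
Proof.
  intros Ht HG HH HD.
  assert (Hloc : forall s, t0 < s < t1 -> locally s (fun r : R => t0 < r < t1)).
  { intros s Hs. apply (locally_between (fun r => r)); [apply continuous_id | exact Hs]. }
  assert (Dz : forall s x y, t0 < s < t1 ->
            is_derive (fun u => int_z G (u, x, y)) s (int_z H (s, x, y))).
  { intros s x y Hs. unfold int_z; simpl.
    apply (is_derive_RInt01_param (fun u z => G u x y z) (fun u z => H u x y z)).
    - eapply filter_imp; [| exact (Hloc s Hs)]. intros u Hu r. apply HD, Hu.
    - intros r. apply (continuous_comp (fun q : R * R => (fst q, x, y, snd q)) (at4 H));
        [continuous_tuple | apply HH, Hs].
    - eapply filter_imp; [| exact (Hloc s Hs)]. intros u Hu r.
      apply (continuous_comp (fun r : R => (u, x, y, r)) (at4 G));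
        [continuous_tuple | apply HG, Hu]. }
  assert (Dyz : forall s x, t0 < s < t1 ->
            is_derive (fun u => int_yz G (u, x)) s (int_yz H (s, x))).
  { intros s x Hs. unfold int_yz.
    apply (is_derive_RInt01_param (fun u y => int_z G (u, x, y)) (fun u y => int_z H (u, x, y))).
    - eapply filter_imp; [| exact (Hloc s Hs)]. intros u Hu r. apply Dz, Hu.
    - intros r. apply (continuous_comp (fun q : R * R => (fst q, x, snd q)) (int_z H));
        [continuous_tuple | apply continuous_int_z; auto].
    - eapply filter_imp; [| exact (Hloc s Hs)]. intros u Hu r.
      apply (continuous_comp (fun r : R => (u, x, r)) (int_z G));
        [continuous_tuple | apply continuous_int_z; auto]. }
  change (is_derive (fun s => RInt (fun x => int_yz G (s, x)) 0 1) t
            (RInt (fun x => int_yz H (t, x)) 0 1)).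
  apply (is_derive_RInt01_param (fun u x => int_yz G (u, x)) (fun u x => int_yz H (u, x))).
  - eapply filter_imp; [| exact (Hloc t Ht)]. intros u Hu r. apply Dyz, Hu.
  - intros r. apply continuous_ext with (f := int_yz H); [intros [a b]; reflexivity|].
    apply continuous_int_yz; auto.
  - eapply filter_imp; [| exact (Hloc t Ht)]. intros u Hu r.
    apply (continuous_comp (fun r : R => (u, r)) (int_yz G));
      [continuous_tuple | apply continuous_int_yz; auto].
Qed.

End TimeDerivative.

(** * Smooth fields and the symmetry of second derivatives *)

Section Smooth.
Variables (t0 t1 : R) (F : field).
Hypothesis HF : smooth_on t0 t1 F.

Lemma smooth_on_pd k : (k < 4)%nat -> smooth_on t0 t1 (pd k F).
Proof.
  intros Hk ds Hds t x y z Ht.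
  change (pd k F) with (iterd (k :: nil) F). unfold iterd. rewrite <- fold_right_app.
  apply HF; auto. intros d Hd. apply in_app_or in Hd. destruct Hd as [Hd|[Hd|[]]]; subst; auto.
Qed.

Lemma cont_slab_smooth : cont_slab t0 t1 F.
Proof. intros t x y z Ht. exact (proj2 (HF nil (fun d (Hd : In d nil) => match Hd with end) t x y z Ht)). Qed.

Lemma ex_pd_smooth k t x y z : (k < 4)%nat -> t0 < t < t1 -> ex_pd k F t x y z.
Proof. intros Hk Ht. exact (proj1 (HF nil (fun d (Hd : In d nil) => match Hd with end) t x y z Ht) k Hk). Qed.

End Smooth.

Definition coord (k : nat) (p : R * R * R * R) : R :=
  match k with
  | 0 => fst (fst (fst p)) | 1 => snd (fst (fst p)) | 2 => snd (fst p) | _ => snd p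
  end.

Definition set_coord (k : nat) (s : R) (p : R * R * R * R) : R * R * R * R :=
  match k with
  | 0 => (s, snd (fst (fst p)), snd (fst p), snd p)
  | 1 => (fst (fst (fst p)), s, snd (fst p), snd p)
  | 2 => (fst (fst (fst p)), snd (fst (fst p)), s, snd p)
  | _ => (fst (fst (fst p)), snd (fst (fst p)), snd (fst p), s)
  end.

Ltac coord_cases p k := destruct p as [[[? ?] ?] ?]; destruct k as [|[|[|k]]]; reflexivity.

Lemma coord_set_coord k s p : coord k (set_coord k s p) = s.
Proof. coord_cases p k. Qed.

Lemma set_coord_coord k p : set_coord k (coord k p) p = p.
Proof. coord_cases p k. Qed.

Lemma set_coord_twice k s s' p : set_coord k s (set_coord k s' p) = set_coord k s p.
Proof. coord_cases p k. Qed.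

Lemma coord0_set_coordS i s p : coord 0 (set_coord (S i) s p) = coord 0 p.
Proof. destruct p as [[[? ?] ?] ?]; destruct i as [|[|i]]; reflexivity. Qed.

Lemma set_coord_comm a b s s' p : (a < 4)%nat -> (b < 4)%nat -> a <> b ->
  set_coord a s (set_coord b s' p) = set_coord b s' (set_coord a s p).
Proof.
  intros Ha Hb Hab. destruct p as [[[? ?] ?] ?].
  destruct a as [|[|[|[|a]]]]; destruct b as [|[|[|[|b]]]]; try lia; reflexivity.
Qed.

Lemma continuous_set_coord k (r : R * (R * R * R * R)) :
  continuous (fun r : R * (R * R * R * R) => set_coord k (fst r) (snd r)) r.
Proof. destruct k as [|[|[|k]]]; simpl; continuous_tuple. Qed.

Lemma continuous_set_coord2 a b p (r : R * R) :
  continuous (fun r : R * R => set_coord a (fst r) (set_coord b (snd r) p)) r.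
Proof.
  apply (continuous_comp (fun r : R * R => (fst r, set_coord b (snd r) p))
           (fun r : R * (R * R * R * R) => set_coord a (fst r) (snd r)));
    [| apply continuous_set_coord].
  apply continuous_pair; [continuous_tuple|].
  apply (continuous_comp (fun r : R * R => (snd r, p))
           (fun r : R * (R * R * R * R) => set_coord b (fst r) (snd r)));
    [continuous_tuple | apply continuous_set_coord].
Qed.

Lemma Derive_slice F k s p :
  Derive (fun u => at4 F (set_coord k u p)) s = at4 (pd k F) (set_coord k s p).
Proof.
  transitivity (Derive (fun u => at4 F (set_coord k u (set_coord k s p))) (coord k (set_coord k s p))).
  - rewrite coord_set_coord. apply Derive_ext. intros u. now rewrite set_coord_twice.
  - destruct p as [[[? ?] ?] ?]; destruct k as [|[|[|k]]]; reflexivity.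
Qed.

Lemma ex_pd_slice F k q : ex_pd k F (coord 0 q) (coord 1 q) (coord 2 q) (coord 3 q) ->
  ex_derive (fun u => at4 F (set_coord k u q)) (coord k q).
Proof. destruct q as [[[? ?] ?] ?]; destruct k as [|[|[|k]]]; auto. Qed.

Lemma is_derive_slice t0 t1 F k s p : smooth_on t0 t1 F -> (k < 4)%nat ->
  t0 < coord 0 (set_coord k s p) < t1 ->
  is_derive (fun u => at4 F (set_coord k u p)) s (at4 (pd k F) (set_coord k s p)).
Proof.
  intros HF Hk Hq. rewrite <- Derive_slice. apply Derive_correct.
  pose proof (ex_pd_slice F k _ (ex_pd_smooth t0 t1 F HF k _ _ _ _ Hk Hq)) as H.
  rewrite coord_set_coord in H.
  eapply ex_derive_ext; [|exact H]. intros u. simpl. now rewrite set_coord_twice.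
Qed.

Section Schwarz.
Variables (a b : nat) (p : R * R * R * R).
Hypotheses (Ha : (a < 4)%nat) (Hb : (b < 4)%nat) (Hab : a <> b).

Let slice2 u v := set_coord a u (set_coord b v p).

Lemma slice2_comm u v : slice2 u v = set_coord b v (set_coord a u p).
Proof. apply set_coord_comm; auto. Qed.

Lemma Derive_slice2_b G u v :
  Derive (fun w => at4 G (slice2 u w)) v = at4 (pd b G) (slice2 u v).
Proof.
  rewrite slice2_comm, <- Derive_slice. apply Derive_ext. intros w. now rewrite slice2_comm.
Qed.

Lemma Derive2_slice2_ab G u v :
  Derive (fun w => Derive (fun w' => at4 G (slice2 w w')) v) u = at4 (pd a (pd b G)) (slice2 u v).
Proof. unfold slice2. rewrite <- Derive_slice. apply Derive_ext. intros w. apply Derive_slice2_b. Qed.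

Lemma Derive2_slice2_ba G u v :
  Derive (fun w => Derive (fun w' => at4 G (slice2 w' w)) u) v = at4 (pd b (pd a G)) (slice2 u v).
Proof. rewrite <- Derive_slice2_b. apply Derive_ext. intros w. unfold slice2. apply Derive_slice. Qed.

Lemma ex_derive_slice2_b t0 t1 G u v : smooth_on t0 t1 G -> t0 < coord 0 (slice2 u v) < t1 ->
  ex_derive (fun w => at4 G (slice2 u w)) v.
Proof.
  intros HG Ht. eexists.
  eapply is_derive_ext; [intros w; now rewrite slice2_comm|].
  apply (is_derive_slice t0 t1); auto. rewrite <- slice2_comm. exact Ht.
Qed.

Lemma continuity_2d_slice2 G : continuous (at4 G) p ->
  continuity_2d_pt (fun u v => at4 G (slice2 u v)) (coord a p) (coord b p).
Proof.
  intros HG. apply continuity_2d_pt_filterlim.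
  assert (Hp : slice2 (coord a p) (coord b p) = p) by (unfold slice2; now rewrite !set_coord_coord).
  rewrite <- Hp in HG.
  exact (continuous_comp (fun r : R * R => slice2 (fst r) (snd r)) (at4 G) (coord a p, coord b p)
           (continuous_set_coord2 a b p _) HG).
Qed.

Lemma Schwarz_hyp_slice2 t0 t1 F : smooth_on t0 t1 F -> t0 < coord 0 p < t1 ->
  locally_2d (fun u v =>
    ex_derive (fun w => at4 F (slice2 w v)) u /\ ex_derive (fun w => at4 F (slice2 u w)) v /\
    ex_derive (fun w => Derive (fun w' => at4 F (slice2 w w')) v) u /\
    ex_derive (fun w => Derive (fun w' => at4 F (slice2 w' w)) u) v) (coord a p) (coord b p).
Proof.
  intros HF Hp. apply locally_2d_locally.
  assert (Hl : locally (coord a p, coord b p)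
            (fun r : R * R => t0 < coord 0 (slice2 (fst r) (snd r)) < t1)).
  { apply (locally_between (fun r : R * R => coord 0 (slice2 (fst r) (snd r)))).
    - apply (continuous_comp (fun r : R * R => slice2 (fst r) (snd r)) (coord 0));
        [apply continuous_set_coord2 | simpl; continuous_tuple].
    - unfold slice2. cbn [fst snd]. now rewrite !set_coord_coord. }
  eapply filter_imp; [| exact Hl]. intros [u v] Huv. cbn [fst snd] in Huv |- *.
  assert (HFa : smooth_on t0 t1 (pd a F)) by now apply smooth_on_pd.
  assert (HFb : smooth_on t0 t1 (pd b F)) by now apply smooth_on_pd.
  split; [|split; [|split]].
  - eexists. now apply (is_derive_slice t0 t1).
  - now apply (ex_derive_slice2_b t0 t1).
  - eapply ex_derive_ext; [intros w; symmetry; apply Derive_slice2_b|].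
    eexists. now apply (is_derive_slice t0 t1).
  - eapply ex_derive_ext; [intros w; symmetry; apply Derive_slice|].
    now apply (ex_derive_slice2_b t0 t1).
Qed.

End Schwarz.

Lemma pd_comm t0 t1 F a b t x y z : smooth_on t0 t1 F -> (a < 4)%nat -> (b < 4)%nat ->
  t0 < t < t1 -> pd a (pd b F) t x y z = pd b (pd a F) t x y z.
Proof.
  intros HF Ha Hb Ht.
  destruct (Nat.eq_dec a b) as [<-|Hab]; [reflexivity|].
  set (p := (t, x, y, z)).
  assert (Hp : set_coord a (coord a p) (set_coord b (coord b p) p) = p)
    by now rewrite !set_coord_coord.
  assert (Hc : forall G, smooth_on t0 t1 G -> continuous (at4 G) p)
    by (intros G HG; now apply (cont_slab_smooth t0 t1)).
  pose proof (Schwarz (fun u v => at4 F (set_coord a u (set_coord b v p))) (coord a p) (coord b p)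
    (Schwarz_hyp_slice2 a b p Ha Hb Hab t0 t1 F HF Ht)) as HS.
  cbv beta in HS. rewrite Derive2_slice2_ab, Derive2_slice2_ba, Hp in HS by auto.
  apply HS.
  - eapply continuity_2d_pt_ext; [intros u v; symmetry; apply Derive2_slice2_ab; auto|].
    apply continuity_2d_slice2, Hc. apply smooth_on_pd; [apply smooth_on_pd|]; auto.
  - eapply continuity_2d_pt_ext; [intros u v; symmetry; apply Derive2_slice2_ba; auto|].
    apply continuity_2d_slice2, Hc. apply smooth_on_pd; [apply smooth_on_pd|]; auto.
Qed.

Lemma is_derive_slice_spatial t0 t1 F i p : smooth_on t0 t1 F -> (i < 3)%nat ->
  t0 < coord 0 p < t1 ->
  is_derive (fun s => at4 F (set_coord (S i) s p)) (coord (S i) p) (at4 (dx i F) p).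
Proof.
  intros HF Hi Hp. rewrite <- (set_coord_coord (S i) p) at 2.
  apply (is_derive_slice t0 t1); auto; [lia|]. now rewrite coord0_set_coordS.
Qed.

Lemma continuous_slice_at t0 t1 F t x y z : cont_slab t0 t1 F -> t0 < t < t1 ->
  continuous (fun q : R * R * R => F t (fst (fst q)) (snd (fst q)) (snd q)) (x, y, z).
Proof. intros HF Ht. now apply cont3_slice with t0 t1. Qed.

Ltac solve_smooth :=
  lazymatch goal with
  | |- smooth_on _ _ (pd _ _) => apply smooth_on_pd; [solve_smooth | lia]
  | |- smooth_on _ _ (dx _ _) => apply smooth_on_pd; [solve_smooth | lia]
  | H : forall k, (k < 3)%nat -> smooth_on _ _ (?v k) |- smooth_on _ _ (?v _) => apply H; lia
  | |- _ => eassumption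
  end.

Lemma continuous_at4_smooth t0 t1 F t x y z : smooth_on t0 t1 F -> t0 < t < t1 ->
  continuous (fun q : R * R * R * R => F (fst (fst (fst q))) (snd (fst (fst q))) (snd (fst q)) (snd q))
    (t, x, y, z).
Proof. intros HF Ht. now apply (cont_slab_smooth t0 t1). Qed.

Ltac slab_atom := eapply continuous_at4_smooth; [solve_smooth | eassumption].
Ltac slice_atom := eapply continuous_slice_at; [apply cont_slab_smooth; solve_smooth | eassumption].

Ltac cont3_auto :=
  let x := fresh "x" in let y := fresh "y" in let z := fresh "z" in
  intros x y z; cbv beta zeta; continuity_with slice_atom.

(** * Periodicity and integration by parts *)

Lemma Derive_periodic (g : R -> R) (x : R) : (forall s, g (s + 1) = g s) ->
  Derive g (x + 1) = Derive g x.
Proof.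
  intros Hg. unfold Derive. f_equal. apply Lim_ext. intros h.
  replace (x + 1 + h) with (x + h + 1) by ring. now rewrite !Hg.
Qed.

Lemma periodic_pd (F : field) k : periodic F -> periodic (pd k F).
Proof.
  intros HF t x y z.
  destruct k as [|[|[|k]]]; unfold pd; (split; [|split]);
    first [ apply Derive_periodic; intros s; apply HF
          | apply Derive_ext; intros s; apply HF ].
Qed.

Lemma periodic_lift1 (op : R -> R) (F : field) : periodic F ->
  periodic (fun t x y z => op (F t x y z)).
Proof. intros HF t x y z. destruct (HF t x y z) as [-> [-> ->]]. auto. Qed.

Lemma periodic_lift2 (op : R -> R -> R) (F G : field) : periodic F -> periodic G ->
  periodic (fun t x y z => op (F t x y z) (G t x y z)).
Proof.
  intros HF HG t x y z.
  destruct (HF t x y z) as [-> [-> ->]]. destruct (HG t x y z) as [-> [-> ->]]. auto.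
Qed.

Lemma periodic_sum3 (F : nat -> field) : (forall k, (k < 3)%nat -> periodic (F k)) ->
  periodic (fun t x y z => sum3 (fun k => F k t x y z)).
Proof.
  intros HF. unfold sum3.
  apply (periodic_lift2 Rplus (fun t x y z => F 0%nat t x y z + F 1%nat t x y z) (F 2%nat));
    [apply (periodic_lift2 Rplus) |]; apply HF; lia.
Qed.

Lemma RInt01_eq0 (f : R -> R) : (forall x, 0 <= x <= 1 -> f x = 0) -> RInt f 0 1 = 0.
Proof.
  intros Hf. rewrite (RInt_ext f (fun _ => 0)); [apply RInt01_const|].
  intros x Hx. rewrite Rmin_left, Rmax_right in Hx by lra. apply Hf. lra.
Qed.

Section PeriodicIntegration.
Variables h dh : R -> R -> R -> R.
Hypotheses (Hh : cont3 h) (Hdh : cont3 dh).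

Lemma int3_derive_z_periodic :
  (forall x y z, is_derive (fun s => h x y s) z (dh x y z)) ->
  (forall x y, h x y 1 = h x y 0) -> int3 dh = 0.
Proof.
  intros Hd Hp. apply RInt01_eq0; intros x _. apply RInt01_eq0; intros y _.
  apply (RInt01_derive_periodic (h x y)); auto.
  intros s. now apply cont3_fix_xy.
Qed.

Lemma is_derive_RInt_z_y x y :
  (forall x y z, is_derive (fun s => h x s z) y (dh x y z)) ->
  is_derive (fun s => RInt (fun z => h x s z) 0 1) y (RInt (fun z => dh x y z) 0 1).
Proof.
  intros Hd. apply (is_derive_RInt01_param (fun u z => h x u z) (fun u z => dh x u z)).
  - apply filter_forall. intros u s. apply Hd.
  - intros s. now apply cont3_fix_x.
  - apply filter_forall. intros u s. now apply cont3_fix_xy.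
Qed.

Lemma int3_derive_y_periodic :
  (forall x y z, is_derive (fun s => h x s z) y (dh x y z)) ->
  (forall x z, h x 1 z = h x 0 z) -> int3 dh = 0.
Proof.
  intros Hd Hp. apply RInt01_eq0; intros x _.
  apply (RInt01_derive_periodic (fun y => RInt (fun z => h x y z) 0 1)).
  - intros y. now apply is_derive_RInt_z_y.
  - intros y. now apply continuous_RInt_z_in_y.
  - apply RInt_ext. intros z _. apply Hp.
Qed.

Lemma int3_derive_x_periodic :
  (forall x y z, is_derive (fun s => h s y z) x (dh x y z)) ->
  (forall y z, h 1 y z = h 0 y z) -> int3 dh = 0.
Proof.
  intros Hd Hp.
  apply (RInt01_derive_periodic (fun x => RInt (fun y => RInt (fun z => h x y z) 0 1) 0 1)).
  - intros x.
    apply (is_derive_RInt01_param (fun u y => RInt (fun z => h u y z) 0 1)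
             (fun u y => RInt (fun z => dh u y z) 0 1)).
    + apply filter_forall. intros u y.
      apply (is_derive_RInt01_param (fun u z => h u y z) (fun u z => dh u y z)).
      * apply filter_forall. intros u' s. apply Hd.
      * intros s. now apply cont3_fix_y.
      * apply filter_forall. intros u' s. now apply cont3_fix_xy.
    + intros s. now apply continuous_RInt_z.
    + apply filter_forall. intros u s. now apply continuous_RInt_z_in_y.
  - intros x. now apply continuous_RInt_yz.
  - apply RInt_ext. intros y _. apply RInt_ext. intros z _. apply Hp.
Qed.

End PeriodicIntegration.

Lemma int3_derive_periodic (H dH : field) k t : (k < 3)%nat -> periodic H ->
  cont3 (H t) -> cont3 (dH t) ->
  (forall x y z, is_derive (fun s => at4 H (set_coord (S k) s (t, x, y, z)))
                   (coord (S k) (t, x, y, z)) (dH t x y z)) ->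
  int3 (dH t) = 0.
Proof.
  intros Hk HP Hc Hdc Hd.
  destruct k as [|[|[|k]]]; try lia.
  - apply (int3_derive_x_periodic (H t)); auto.
    intros y z. rewrite <- (Rplus_0_l 1) at 1. exact (proj1 (HP t 0 y z)).
  - apply (int3_derive_y_periodic (H t)); auto.
    intros x z. rewrite <- (Rplus_0_l 1) at 1. exact (proj1 (proj2 (HP t x 0 z))).
  - apply (int3_derive_z_periodic (H t)); auto.
    intros x y. rewrite <- (Rplus_0_l 1) at 1. exact (proj2 (proj2 (HP t x y 0))).
Qed.

Fixpoint list_abs_max (G : Compactness.Tn 3 R -> R) (l : list (Compactness.Tn 3 R)) : R :=
  match l with nil => 0 | p :: l' => Rmax (Rabs (G p) + 1) (list_abs_max G l') end.

Lemma list_abs_max_ge G l p : In p l -> Rabs (G p) + 1 <= list_abs_max G l.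
Proof.
  induction l as [|q l IH]; simpl; intros H; [destruct H|].
  destruct H as [<-|H]; [apply Rmax_l|].
  eapply Rle_trans; [apply IH; auto | apply Rmax_r].
Qed.

Lemma bounded_cube (g : R -> R -> R -> R) : cont3 g ->
  exists B, forall x y z, 0 <= x <= 1 -> 0 <= y <= 1 -> 0 <= z <= 1 -> Rabs (g x y z) <= B.
Proof.
  intros Hc.
  set (G := fun p : Compactness.Tn 3 R => match p with (x, (y, (z, _))) => g x y z end).
  assert (Hd : forall p : Compactness.Tn 3 R, {d : posreal | forall x' y' z',
     Rabs (x' - fst p) < d -> Rabs (y' - fst (snd p)) < d -> Rabs (z' - fst (snd (snd p))) < d ->
     Rabs (g x' y' z' - G p) < 1}).
  { intros [x [y [z u]]]. apply constructive_indefinite_description.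
    destruct (proj1 (filterlim_locally _ _) (Hc x y z) (mkposreal 1 Rlt_0_1)) as [d Hd].
    exists d. intros x' y' z' H1 H2 H3. apply (Hd (x', y', z')). repeat split; assumption. }
  apply NNPP. intros Hneg.
  apply (Compactness.compactness_list 3 (0, (0, (0, tt))) (1, (1, (1, tt)))
           (fun p => proj1_sig (Hd p))).
  intros [l Hl]. apply Hneg. exists (list_abs_max G l). intros x y z Hx Hy Hz.
  destruct (Hl (x, (y, (z, tt)))) as [[p1 [p2 [p3 u]]] [Hin [_ [C1 [C2 [C3 _]]]]]].
  { simpl. repeat split; lra. }
  pose proof (proj2_sig (Hd (p1, (p2, (p3, u)))) x y z C1 C2 C3) as E.
  pose proof (list_abs_max_ge G l _ Hin) as M. simpl in E, M.
  pose proof (Rabs_triang_inv (g x y z) (g p1 p2 p3)). lra.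
Qed.

Lemma periodic_shift_nat (h : R -> R) : (forall s, h (s + 1) = h s) ->
  forall n s, h (s + INR n) = h s /\ h (s - INR n) = h s.
Proof.
  intros Hp n. induction n as [|n IH]; intros s.
  - simpl. rewrite Rplus_0_r, Rminus_0_r. auto.
  - rewrite S_INR. split.
    + replace (s + (INR n + 1)) with ((s + INR n) + 1) by ring. rewrite Hp. apply IH.
    + rewrite <- (proj2 (IH s)), <- (Hp (s - (INR n + 1))). f_equal. ring.
Qed.

Lemma periodic_reduce01 (h : R -> R) : (forall s, h (s + 1) = h s) ->
  forall x, exists x0, 0 <= x0 <= 1 /\ h x = h x0.
Proof.
  intros Hp x. destruct (base_Int_part x) as [B1 B2].
  set (m := Int_part x) in *.
  exists (x - IZR m). split; [lra|].
  destruct (Z_le_gt_dec 0 m) as [Hm|Hm].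
  - rewrite <- (Z2Nat.id m) in * by lia. rewrite <- INR_IZR_INZ.
    rewrite <- (proj1 (periodic_shift_nat h Hp (Z.to_nat m) (x - INR (Z.to_nat m)))). f_equal. ring.
  - assert (E : IZR m = - INR (Z.to_nat (- m))).
    { rewrite INR_IZR_INZ, Z2Nat.id, opp_IZR by lia. ring. }
    rewrite E, <- (proj2 (periodic_shift_nat h Hp (Z.to_nat (- m)) (x - - INR (Z.to_nat (- m))))).
    f_equal. ring.
Qed.

Lemma bounded_periodic (g : R -> R -> R -> R) : cont3 g ->
  (forall x y z, g (x + 1) y z = g x y z /\ g x (y + 1) z = g x y z /\ g x y (z + 1) = g x y z) ->
  exists B, forall x y z, g x y z <= B.
Proof.
  intros Hc Hp. destruct (bounded_cube g Hc) as [B HB]. exists B. intros x y z.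
  destruct (periodic_reduce01 (fun s => g s y z) (fun s => proj1 (Hp s y z)) x) as [x0 [Hx0 E1]].
  destruct (periodic_reduce01 (fun s => g x0 s z) (fun s => proj1 (proj2 (Hp x0 s z))) y)
    as [y0 [Hy0 E2]].
  destruct (periodic_reduce01 (fun s => g x0 y0 s) (fun s => proj2 (proj2 (Hp x0 y0 s))) z)
    as [z0 [Hz0 E3]].
  simpl in E1, E2, E3. rewrite E1, E2, E3.
  eapply Rle_trans; [apply Rle_abs | apply HB; auto].
Qed.

Lemma sup3_ge (g : R -> R -> R -> R) : (exists B, forall x y z, g x y z <= B) ->
  forall x y z, g x y z <= sup3 g.
Proof.
  intros [B HB] x y z. unfold sup3.
  destruct (Lub_Rbar_correct (fun r => exists x y z, r = g x y z)) as [Hub Hleast].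
  assert (H0 : Rbar_le (g x y z) (Lub_Rbar (fun r => exists x y z, r = g x y z)))
    by (apply Hub; exists x, y, z; reflexivity).
  assert (H1 : Rbar_le (Lub_Rbar (fun r => exists x y z, r = g x y z)) B).
  { apply Hleast. intros r [x' [y' [z' ->]]]. apply HB. }
  destruct (Lub_Rbar (fun r => exists x y z, r = g x y z)); simpl in *; tauto.
Qed.

(** * The differentiated velocity equation *)

(* The right-hand side of the equation for [d_t v^i] in terms of the point values [V k = v^k],
   [DV k m = d_k v^m], [DL k = d_k L], with [ta = t^-al], [A = al (1 - 3K) / t] and the
   coefficient [Q = (1 - K) / (1 - K |v|^2)] kept as parameters; [v_rhs_d] is its derivative
   along a curve on which these quantities have derivatives [V'], [DV'], [DL'], [Q']. *)
Definition v_rhs (ta A c1 c2 : R) (V : nat -> R) (DV : nat -> nat -> R) (DL : nat -> R)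
  (Q : R) (i : nat) : R :=
  let w := sum3 (fun j => V j ^ 2) in
  - A * V i
  - c1 * ta * (1 - w) * DL i
  - ta * sum3 (fun j => V j * DV j i)
  + ta * (1 - Q) * V i * sum3 (fun j => DV j j)
  + ta * c2 * (1 - Q) * V i * sum3 (fun j => V j * DL j)
  + A * Q * w * V i.

Definition v_rhs_d (ta A c1 c2 : R) (V : nat -> R) (DV : nat -> nat -> R) (DL : nat -> R)
  (V' : nat -> R) (DV' : nat -> nat -> R) (DL' : nat -> R) (Q Q' : R) (i : nat) : R :=
  let w := sum3 (fun j => V j ^ 2) in
  let w' := sum3 (fun j => 2 * V j * V' j) in
  let D := sum3 (fun j => DV j j) in
  let D' := sum3 (fun j => DV' j j) in
  let S := sum3 (fun j => V j * DL j) in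
  let S' := sum3 (fun j => V' j * DL j + V j * DL' j) in
  - A * V' i
  - c1 * ta * ((- w') * DL i + (1 - w) * DL' i)
  - ta * sum3 (fun j => V' j * DV j i + V j * DV' j i)
  + ta * ((- Q') * V i * D + (1 - Q) * V' i * D + (1 - Q) * V i * D')
  + ta * c2 * ((- Q') * V i * S + (1 - Q) * V' i * S + (1 - Q) * V i * S')
  + A * (Q' * w * V i + Q * w' * V i + Q * w * V' i).

Definition Qcoef (K w : R) : R := (1 - K) / (1 - K * w).

Definition Qcoef_d (K w w' : R) : R := (1 - K) * K * w' / (1 - K * w) ^ 2.

Definition v_rhs_at (al K t : R) (V : nat -> R) (DV : nat -> nat -> R) (DL : nat -> R) :
  nat -> R :=
  v_rhs (Rpower t (- al)) (al * (1 - 3 * K) / t) (K / (1 + K)) ((1 - K) / (1 + K)) V DV DL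
    (Qcoef K (sum3 (fun j => V j ^ 2))).

Definition v_rhs_at_d (al K t : R) (V : nat -> R) (DV : nat -> nat -> R) (DL : nat -> R)
  (V' : nat -> R) (DV' : nat -> nat -> R) (DL' : nat -> R) : nat -> R :=
  v_rhs_d (Rpower t (- al)) (al * (1 - 3 * K) / t) (K / (1 + K)) ((1 - K) / (1 + K))
    V DV DL V' DV' DL' (Qcoef K (sum3 (fun j => V j ^ 2)))
    (Qcoef_d K (sum3 (fun j => V j ^ 2)) (sum3 (fun j => 2 * V j * V' j))).

Section RhsDerivative.
Variables (V : nat -> R -> R) (DV : nat -> nat -> R -> R) (DL : nat -> R -> R).
Variables (V' : nat -> R) (DV' : nat -> nat -> R) (DL' : nat -> R) (s0 : R).
Hypotheses (HV : forall k, (k < 3)%nat -> is_derive (V k) s0 (V' k))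
  (HDV : forall k m, (k < 3)%nat -> (m < 3)%nat -> is_derive (DV k m) s0 (DV' k m))
  (HDL : forall k, (k < 3)%nat -> is_derive (DL k) s0 (DL' k)).

Lemma is_derive_v_rhs ta A c1 c2 (Qf : R -> R) Q' i : (i < 3)%nat -> is_derive Qf s0 Q' ->
  is_derive (fun s => v_rhs ta A c1 c2 (fun k => V k s) (fun k m => DV k m s) (fun k => DL k s) (Qf s) i)
    s0 (v_rhs_d ta A c1 c2 (fun k => V k s0) (fun k m => DV k m s0) (fun k => DL k s0)
          V' DV' DL' (Qf s0) Q' i).
Proof.
  intros Hi HQ.
  assert (EV : forall k, (k < 3)%nat -> Derive (V k) s0 = V' k)
    by (intros; apply is_derive_unique; auto).
  assert (EDV : forall k m, (k < 3)%nat -> (m < 3)%nat -> Derive (DV k m) s0 = DV' k m)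
    by (intros; apply is_derive_unique; auto).
  assert (EDL : forall k, (k < 3)%nat -> Derive (DL k) s0 = DL' k)
    by (intros; apply is_derive_unique; auto).
  assert (EQ : Derive Qf s0 = Q') by (apply is_derive_unique; auto).
  unfold v_rhs, v_rhs_d, sum3.
  auto_derive.
  - repeat match goal with
      | |- _ /\ _ => split
      | |- True => exact I
      | |- ex_derive (fun x => V _ x) _ => eexists; apply HV; lia
      | |- ex_derive (fun x => DV _ _ x) _ => eexists; apply HDV; lia
      | |- ex_derive (fun x => DL _ x) _ => eexists; apply HDL; lia
      | |- ex_derive (fun x => Qf x) _ => eexists; apply HQ
      end.
  - change (fun x => V ?k x) with (V k). change (fun x => DV ?k ?m x) with (DV k m).
    change (fun x => DL ?k x) with (DL k). change (fun x => Qf x) with Qf.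
    rewrite !EV, !EDV, !EDL, !EQ by lia. ring.
Qed.

Lemma is_derive_Qcoef K : 1 - K * sum3 (fun j => V j s0 ^ 2) <> 0 ->
  is_derive (fun s => Qcoef K (sum3 (fun j => V j s ^ 2))) s0
    (Qcoef_d K (sum3 (fun j => V j s0 ^ 2)) (sum3 (fun j => 2 * V j s0 * V' j))).
Proof.
  intros Hw.
  assert (EV : forall k, (k < 3)%nat -> Derive (V k) s0 = V' k)
    by (intros; apply is_derive_unique; auto).
  unfold Qcoef, Qcoef_d, sum3 in *.
  auto_derive.
  - repeat match goal with
      | |- _ /\ _ => split
      | |- True => exact I
      | |- ex_derive (fun x => V _ x) _ => eexists; apply HV; lia
      | |- _ <> 0 => intros HH; apply Hw; rewrite <- HH; ring
      end.
  - change (fun x => V ?k x) with (V k). rewrite !EV by lia.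
    field. intros HH; apply Hw; rewrite <- HH; ring.
Qed.

Lemma is_derive_v_rhs_at al K t i : (i < 3)%nat -> 1 - K * sum3 (fun j => V j s0 ^ 2) <> 0 ->
  is_derive (fun s => v_rhs_at al K t (fun k => V k s) (fun k m => DV k m s) (fun k => DL k s) i) s0
    (v_rhs_at_d al K t (fun k => V k s0) (fun k m => DV k m s0) (fun k => DL k s0) V' DV' DL' i).
Proof. intros Hi Hw. apply is_derive_v_rhs; auto. now apply is_derive_Qcoef. Qed.

End RhsDerivative.

Lemma vsq_ge0 (v : vfield) t x y z : 0 <= vsq v t x y z.
Proof. unfold vsq, sum3. pose proof (pow2_ge_0 (v 0%nat t x y z)). pose proof (pow2_ge_0 (v 1%nat t x y z)). pose proof (pow2_ge_0 (v 2%nat t x y z)). lra. Qed.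

Lemma vsq_lt (v : vfield) t x y z : sqrt (vsq v t x y z) < 1 / 10 -> vsq v t x y z < 1 / 100.
Proof.
  intros Hs. rewrite <- (sqrt_sqrt (vsq v t x y z)) by apply vsq_ge0.
  pose proof (sqrt_pos (vsq v t x y z)). nra.
Qed.

Lemma Qcoef_denom_neq0 (v : vfield) t x y z K : 0 <= K <= 1 / 3 ->
  sqrt (vsq v t x y z) < 1 / 10 -> 1 - K * vsq v t x y z <> 0.
Proof. intros HK Hs. pose proof (vsq_ge0 v t x y z). pose proof (vsq_lt v t x y z Hs). nra. Qed.

Section DifferentiatedEquation.
Variables (al K t0 t1 : R) (v : vfield) (L : field).
Hypotheses (HK : 0 <= K <= 1 / 3)
  (Hv : forall k, (k < 3)%nat -> smooth_on t0 t1 (v k)) (HL : smooth_on t0 t1 L)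
  (Hsol : is_solution al K t0 t1 v L)
  (Hsmall : forall t x y z, t0 < t < t1 -> sqrt (vsq v t x y z) < 1 / 10).

Lemma pd0_v_at4 j q : (j < 3)%nat -> t0 < coord 0 q < t1 ->
  at4 (pd 0 (v j)) q = v_rhs_at al K (coord 0 q) (fun k => at4 (v k) q)
     (fun k m => at4 (dx k (v m)) q) (fun k => at4 (dx k L) q) j.
Proof.
  intros Hj Hq. destruct q as [[[t x] y] z].
  exact (proj1 (Hsol t x y z Hq) j Hj).
Qed.

Lemma dx_pd0_v i j t x y z : (i < 3)%nat -> (j < 3)%nat -> t0 < t < t1 ->
  dx i (pd 0 (v j)) t x y z =
  v_rhs_at_d al K t (fun k => v k t x y z) (fun k m => dx k (v m) t x y z) (fun k => dx k L t x y z)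
    (fun k => dx i (v k) t x y z) (fun k m => dx i (dx k (v m)) t x y z)
    (fun k => dx i (dx k L) t x y z) j.
Proof.
  intros Hi Hj Ht.
  set (p := (t, x, y, z)).
  assert (Hp : set_coord (S i) (coord (S i) p) p = p) by apply set_coord_coord.
  assert (Dslice : forall G, smooth_on t0 t1 G ->
            is_derive (fun s => at4 G (set_coord (S i) s p)) (coord (S i) p) (at4 (dx i G) p))
    by (intros G HG; apply (is_derive_slice_spatial t0 t1); auto).
  change (dx i (pd 0 (v j)) t x y z) with (at4 (pd (S i) (pd 0 (v j))) p).
  transitivity (Derive (fun s => at4 (pd 0 (v j)) (set_coord (S i) s p)) (coord (S i) p)).
  { now rewrite Derive_slice, Hp. }
  apply is_derive_unique.
  eapply is_derive_ext.
  { intros s. symmetry. rewrite pd0_v_at4 by (rewrite ?coord0_set_coordS; auto).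
    now rewrite coord0_set_coordS. }
  pose proof (is_derive_v_rhs_at (fun k s => at4 (v k) (set_coord (S i) s p))
    (fun k m s => at4 (dx k (v m)) (set_coord (S i) s p)) (fun k s => at4 (dx k L) (set_coord (S i) s p))
    (fun k => at4 (dx i (v k)) p) (fun k m => at4 (dx i (dx k (v m))) p) (fun k => at4 (dx i (dx k L)) p)
    (coord (S i) p)) as H.
  cbv beta in H. rewrite Hp in H. apply H; [| | | exact Hj | ].
  - intros k Hk. apply Dslice; auto.
  - intros k m Hk Hm. apply Dslice, smooth_on_pd; auto; lia.
  - intros k Hk. apply Dslice, smooth_on_pd; auto; lia.
  - apply (Qcoef_denom_neq0 v t x y z K); auto.
Qed.

End DifferentiatedEquation.

(** * The energy identity *)

(* The terms of [d_i (d_t v^j)] containing no second derivative: the [ta]- and [A]-weighted parts. *)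
Definition rem_ta (K : R) (V : nat -> R) (DV : nat -> nat -> R) (DL : nat -> R) (i j : nat) : R :=
  let w := sum3 (fun k => V k ^ 2) in
  let w' := sum3 (fun k => 2 * V k * DV i k) in
  let Q := Qcoef K w in
  let Q' := Qcoef_d K w w' in
  let D := sum3 (fun k => DV k k) in
  let S := sum3 (fun k => V k * DL k) in
  K / (1 + K) * w' * DL j - sum3 (fun k => DV i k * DV k j)
  - Q' * V j * D + (1 - Q) * DV i j * D
  + (1 - K) / (1 + K) * (- Q' * V j * S + (1 - Q) * DV i j * S
                         + (1 - Q) * V j * sum3 (fun k => DV i k * DL k)).

Definition rem_A (K : R) (V : nat -> R) (DV : nat -> nat -> R) (i j : nat) : R :=
  let w := sum3 (fun k => V k ^ 2) in
  let w' := sum3 (fun k => 2 * V k * DV i k) in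
  Qcoef_d K w w' * w * V j + Qcoef K w * w' * V j + Qcoef K w * w * DV i j.

Lemma v_rhs_at_d_split al K t (V : nat -> R) (DV : nat -> nat -> R) (DL : nat -> R)
  (D2V : nat -> nat -> nat -> R) (D2L : nat -> nat -> R) i j :
  v_rhs_at_d al K t V DV DL (fun k => DV i k) (fun k m => D2V i k m) (fun k => D2L i k) j =
  - (al * (1 - 3 * K) / t) * DV i j
  - K / (1 + K) * Rpower t (- al) * (1 - sum3 (fun k => V k ^ 2)) * D2L i j
  - Rpower t (- al) * sum3 (fun k => V k * D2V i k j)
  + Rpower t (- al) * (1 - Qcoef K (sum3 (fun k => V k ^ 2))) * V j * sum3 (fun k => D2V i k k)
  + Rpower t (- al) * ((1 - K) / (1 + K)) * (1 - Qcoef K (sum3 (fun k => V k ^ 2))) * V j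
      * sum3 (fun k => V k * D2L i k)
  + Rpower t (- al) * rem_ta K V DV DL i j + al * (1 - 3 * K) / t * rem_A K V DV i j.
Proof. unfold v_rhs_at_d, v_rhs_d, rem_ta, rem_A, sum3. ring. Qed.

Section EnergyIntegrands.
Variables (al K : R) (v : vfield) (L : field).

Definition dt_Dvsq : field := fun t x y z =>
  sum3 (fun i => sum3 (fun j => 2 * dx i (v j) t x y z * pd 0 (dx i (v j)) t x y z)).

Definition Qfield : field := fun t x y z => Qcoef K (vsq v t x y z).

Definition DDL_term : field := fun t x y z =>
  sum3 (fun i => sum3 (fun j => dx i (v j) t x y z * (1 - vsq v t x y z) * dx i (dx j L) t x y z)).

Definition Ddiv_term : field := fun t x y z =>
  sum3 (fun i => sum3 (fun j => sum3 (fun k =>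
    dx i (v j) t x y z * (1 - Qfield t x y z) * v j t x y z * dx i (dx k (v k)) t x y z))).

Definition vDDL_term : field := fun t x y z =>
  sum3 (fun i => sum3 (fun j => sum3 (fun k =>
    dx i (v j) t x y z * (1 - Qfield t x y z) * v j t x y z * v k t x y z
      * dx i (dx k L) t x y z))).

Definition transport_term : field := fun t x y z =>
  sum3 (fun i => sum3 (fun j => sum3 (fun k =>
    dx i (v j) t x y z * v k t x y z * dx i (dx k (v j)) t x y z))).

Definition rem_term : field := fun t x y z =>
  sum3 (fun i => sum3 (fun j => dx i (v j) t x y z *
    (Rpower t (- al) * rem_ta K (fun k => v k t x y z) (fun a b => dx a (v b) t x y z)
                         (fun k => dx k L t x y z) i j
     + al * (1 - 3 * K) / t * rem_A K (fun k => v k t x y z) (fun a b => dx a (v b) t x y z) i j))).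

Lemma rhs_terms_eq t : rhs_terms al K v L t =
  - (al * (1 - 3 * K) / t) * int3 (Dvsq v t)
  - K / (1 + K) * Rpower t (- al) * int3 (DDL_term t)
  + Rpower t (- al) * int3 (Ddiv_term t)
  + Rpower t (- al) * ((1 - K) / (1 + K)) * int3 (vDDL_term t).
Proof. reflexivity. Qed.

Lemma dt_Dvsq_eq t0 t1 t x y z : 0 <= K <= 1 / 3 ->
  (forall k, (k < 3)%nat -> smooth_on t0 t1 (v k)) -> smooth_on t0 t1 L ->
  is_solution al K t0 t1 v L ->
  (forall t x y z, t0 < t < t1 -> sqrt (vsq v t x y z) < 1 / 10) -> t0 < t < t1 ->
  / 2 * dt_Dvsq t x y z =
   - (al * (1 - 3 * K) / t) * Dvsq v t x y z
   - K / (1 + K) * Rpower t (- al) * DDL_term t x y z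
   + Rpower t (- al) * Ddiv_term t x y z
   + Rpower t (- al) * ((1 - K) / (1 + K)) * vDDL_term t x y z
   - Rpower t (- al) * transport_term t x y z
   + rem_term t x y z.
Proof.
  intros HK Hv HL Hsol Hsmall Ht.
  transitivity (sum3 (fun i => sum3 (fun j => dx i (v j) t x y z *
     v_rhs_at_d al K t (fun k => v k t x y z) (fun k m => dx k (v m) t x y z)
       (fun k => dx k L t x y z) (fun k => dx i (v k) t x y z)
       (fun k m => dx i (dx k (v m)) t x y z) (fun k => dx i (dx k L) t x y z) j))).
  - unfold dt_Dvsq, sum3.
    rewrite <- !(dx_pd0_v al K t0 t1 v L) by (auto; lia).
    unfold dx. rewrite !(pd_comm t0 t1 (v _) 0 1), !(pd_comm t0 t1 (v _) 0 2),
      !(pd_comm t0 t1 (v _) 0 3) by (auto; try apply Hv; lia).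
    field.
  - unfold sum3.
    rewrite !(v_rhs_at_d_split al K t (fun k => v k t x y z) (fun a b => dx a (v b) t x y z)
      (fun k => dx k L t x y z) (fun a b c => dx a (dx b (v c)) t x y z)
      (fun a b => dx a (dx b L) t x y z)).
    unfold DDL_term, Ddiv_term, vDDL_term, Qfield, transport_term, rem_term, Dvsq, vsq, sum3.
    ring.
Qed.

End EnergyIntegrands.

Section Energy.
Variables (t0 t1 : R) (v : vfield).
Hypothesis Hv : forall k, (k < 3)%nat -> smooth_on t0 t1 (v k).

Lemma is_derive_energy t : t0 < t < t1 -> is_derive (energy v) t (/ 2 * int3 (dt_Dvsq v t)).
Proof.
  intros Ht. apply (is_derive_scal (fun s => int3 (Dvsq v s))).
  apply (is_derive_int3 t0 t1); auto.
  - intros s x y z Hs. unfold Dvsq, at4. cbn [fst snd]. continuity_with slab_atom.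
  - intros s x y z Hs. unfold dt_Dvsq, at4. cbn [fst snd]. continuity_with slab_atom.
  - intros s x y z Hs. unfold Dvsq, dt_Dvsq.
    apply (is_derive_sum3 (fun i u => sum3 (fun j => dx i (v j) u x y z ^ 2))). intros i Hi.
    apply (is_derive_sum3 (fun j u => dx i (v j) u x y z ^ 2)). intros j Hj.
    apply (is_derive_sqr (fun u => dx i (v j) u x y z)), Derive_correct.
    apply (ex_pd_smooth t0 t1 (dx i (v j)) ltac:(solve_smooth) 0); [lia | exact Hs].
Qed.

Definition flux (k : nat) : field := fun t x y z => v k t x y z * (/ 2 * Dvsq v t x y z).

Definition flux_d (k : nat) : field := fun t x y z =>
  dx k (v k) t x y z * (/ 2 * Dvsq v t x y z)
  + v k t x y z * sum3 (fun i => sum3 (fun j => dx i (v j) t x y z * dx k (dx i (v j)) t x y z)).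

Lemma is_derive_flux k p : (k < 3)%nat -> t0 < coord 0 p < t1 ->
  is_derive (fun s => at4 (flux k) (set_coord (S k) s p)) (coord (S k) p) (at4 (flux_d k) p).
Proof.
  intros Hk Hp.
  assert (D : forall F, smooth_on t0 t1 F ->
            is_derive (fun s => at4 F (set_coord (S k) s p)) (coord (S k) p) (at4 (dx k F) p))
    by (intros F HF; now apply (is_derive_slice_spatial t0 t1)).
  assert (Dg : is_derive (fun s => / 2 * sum3 (fun i => sum3 (fun j =>
                  at4 (dx i (v j)) (set_coord (S k) s p) ^ 2))) (coord (S k) p)
                (/ 2 * sum3 (fun i => sum3 (fun j =>
                  2 * at4 (dx i (v j)) (set_coord (S k) (coord (S k) p) p)
                    * at4 (dx k (dx i (v j))) p)))).
  { apply is_derive_scal.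
    apply (is_derive_sum3 (fun i s => sum3 (fun j => at4 (dx i (v j)) (set_coord (S k) s p) ^ 2))).
    intros i Hi. apply (is_derive_sum3 (fun j s => at4 (dx i (v j)) (set_coord (S k) s p) ^ 2)).
    intros j Hj. apply (is_derive_sqr (fun s => at4 (dx i (v j)) (set_coord (S k) s p))).
    apply D. solve_smooth. }
  pose proof (Derive.is_derive_mult _ _ _ _ _ (D (v k) (Hv k Hk)) Dg) as H.
  unfold sum3 in H. cbv beta in H. rewrite !set_coord_coord in H.
  match type of H with is_derive _ _ ?l => replace (at4 (flux_d k) p) with l end.
  - exact H.
  - unfold flux_d, Dvsq, at4, sum3. field.
Qed.

Lemma periodic_Dvsq : (forall k, (k < 3)%nat -> periodic (v k)) -> periodic (Dvsq v).
Proof.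
  intros Hper. unfold Dvsq.
  apply (periodic_sum3 (fun i t x y z => sum3 (fun j => dx i (v j) t x y z ^ 2))). intros i Hi.
  apply (periodic_sum3 (fun j t x y z => dx i (v j) t x y z ^ 2)). intros j Hj.
  apply (periodic_lift1 (fun a => a ^ 2)), periodic_pd, Hper, Hj.
Qed.

Lemma int3_flux_d k t : (forall k, (k < 3)%nat -> periodic (v k)) -> (k < 3)%nat -> t0 < t < t1 ->
  int3 (flux_d k t) = 0.
Proof.
  intros Hper Hk Ht. apply (int3_derive_periodic (flux k) (flux_d k) k t); auto.
  - apply (periodic_lift2 Rmult (v k) (fun t x y z => / 2 * Dvsq v t x y z)); auto.
    apply (periodic_lift1 (Rmult (/ 2))), periodic_Dvsq, Hper.
  - unfold flux, Dvsq. cont3_auto.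
  - unfold flux_d, Dvsq. cont3_auto.
  - intros x y z. now apply (is_derive_flux k (t, x, y, z)).
Qed.

Lemma int3_transport t : (forall k, (k < 3)%nat -> periodic (v k)) -> t0 < t < t1 ->
  int3 (transport_term v t) =
  - int3 (fun x y z => sum3 (fun k => dx k (v k) t x y z) * (/ 2 * Dvsq v t x y z)).
Proof.
  intros Hper Ht.
  transitivity (int3 (fun x y z => 1 * sum3 (fun k => flux_d k t x y z)
                 + -1 * (sum3 (fun k => dx k (v k) t x y z) * (/ 2 * Dvsq v t x y z)))).
  - apply int3_ext. intros x y z.
    unfold transport_term, flux_d, sum3, dx.
    rewrite !(pd_comm t0 t1 (v _) 1 2), !(pd_comm t0 t1 (v _) 1 3), !(pd_comm t0 t1 (v _) 2 3)
      by (auto; try apply Hv; lia).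
    ring.
  - rewrite int3_lin; [| unfold flux_d, Dvsq; cont3_auto | unfold Dvsq; cont3_auto].
    rewrite int3_sum3; [| intros k Hk; unfold flux_d, Dvsq; cont3_auto].
    unfold sum3. rewrite !int3_flux_d by (auto; lia). ring.
Qed.

End Energy.

(** * Pointwise estimates *)

Section PointwiseBounds.
Variables (K M Vb : R) (V : nat -> R) (DV : nat -> nat -> R) (DL : nat -> R).
Hypotheses (HK : 0 <= K <= 1 / 3)
  (HV : forall k, (k < 3)%nat -> Rabs (V k) <= 1 / 10)
  (HVb : forall k, (k < 3)%nat -> Rabs (V k) <= Vb)
  (HDV : forall a b, (a < 3)%nat -> (b < 3)%nat -> Rabs (DV a b) <= M).

Let w := sum3 (fun k => V k ^ 2).
Let l := sum3 (fun k => Rabs (DL k)).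

Lemma bound_ge0 : 0 <= M.
Proof. eapply Rle_trans; [apply Rabs_pos | apply (HDV 0 0); lia]. Qed.

Lemma vsq_bounds : 0 <= w <= 3 / 100 /\ w <= 3 / 10 * Vb.
Proof.
  assert (Hk : forall k, (k < 3)%nat -> 0 <= V k ^ 2 <= 1 / 100 /\ V k ^ 2 <= 1 / 10 * Vb).
  { intros k Hk. rewrite <- pow2_abs.
    pose proof (Rabs_pos (V k)). pose proof (HV k Hk). pose proof (HVb k Hk). nra. }
  unfold w, sum3.
  destruct (Hk 0%nat) as [? ?]; [lia|]. destruct (Hk 1%nat) as [? ?]; [lia|].
  destruct (Hk 2%nat) as [? ?]; [lia|]. lra.
Qed.

Lemma Qcoef_bounds : 0 <= Qcoef K w <= 1.
Proof.
  destruct vsq_bounds as [[Hw0 Hw1] _].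
  assert (Hd : 1 - K <= 1 - K * w <= 1) by nra.
  assert (HQ : Qcoef K w * (1 - K * w) = 1 - K) by (unfold Qcoef; field; lra).
  split; nra.
Qed.

Lemma dvsq_bounds i : (i < 3)%nat ->
  Rabs (sum3 (fun k => 2 * V k * DV i k)) <= 6 / 10 * M /\
  Rabs (sum3 (fun k => 2 * V k * DV i k)) <= 6 * Vb * M.
Proof.
  intros Hi. split.
  - eapply Rle_trans; [apply (sum3_abs_le _ (fun _ => 2 * (1 / 10) * M)); intros k Hk|].
    + apply Rabs_mult_le; [apply Rabs_mult_le; [rewrite Rabs_right by lra; lra | auto] | auto].
    + rewrite sum3_const. lra.
  - eapply Rle_trans; [apply (sum3_abs_le _ (fun _ => 2 * Vb * M)); intros k Hk|].
    + apply Rabs_mult_le; [apply Rabs_mult_le; [rewrite Rabs_right by lra; lra | auto] | auto].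
    + rewrite sum3_const. apply Req_le. ring.
Qed.

Lemma Qcoef_d_bound i : (i < 3)%nat ->
  Rabs (Qcoef_d K w (sum3 (fun k => 2 * V k * DV i k))) <= 3 / 10 * M.
Proof.
  intros Hi. destruct vsq_bounds as [[Hw0 Hw1] _]. destruct (dvsq_bounds i Hi) as [Hw' _].
  unfold Qcoef_d.
  set (d := 1 - K * w). assert (Hd : 99 / 100 <= d) by (unfold d; nra).
  set (c := (1 - K) * K / d ^ 2).
  replace ((1 - K) * K * sum3 (fun k => 2 * V k * DV i k) / d ^ 2)
    with (c * sum3 (fun k => 2 * V k * DV i k)) by (unfold c; field; lra).
  assert (Hcd : c * d ^ 2 = (1 - K) * K) by (unfold c; field; lra).
  assert (Hd2 : 98 / 100 <= d ^ 2) by nra.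
  assert (HKK : 0 <= (1 - K) * K <= 1 / 4) by nra.
  clearbody c. assert (Hc : 0 <= c <= 1 / 2) by (split; nra).
  eapply Rle_trans; [apply (Rabs_mult_le _ _ (1 / 2) (6 / 10 * M)); auto|].
  - rewrite Rabs_right; lra.
  - lra.
Qed.

Lemma sum_bounds i j : (i < 3)%nat -> (j < 3)%nat ->
  Rabs (sum3 (fun k => DV k k)) <= 3 * M /\
  Rabs (sum3 (fun k => V k * DL k)) <= 1 / 10 * l /\
  Rabs (sum3 (fun k => DV i k * DL k)) <= M * l /\
  Rabs (sum3 (fun k => DV i k * DV k j)) <= 3 * M ^ 2 /\
  Rabs (DL j) <= l.
Proof.
  intros Hi Hj. unfold l. split; [|split; [|split; [|split]]].
  - rewrite <- sum3_const. apply sum3_abs_le. intros k Hk. auto.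
  - eapply Rle_trans; [apply (sum3_abs_le _ (fun k => 1 / 10 * Rabs (DL k))); intros k Hk|].
    + apply Rabs_mult_le; auto. apply Rle_refl.
    + unfold sum3. lra.
  - eapply Rle_trans; [apply (sum3_abs_le _ (fun k => M * Rabs (DL k))); intros k Hk|].
    + apply Rabs_mult_le; auto. apply Rle_refl.
    + unfold sum3. apply Req_le. ring.
  - rewrite <- sum3_const. apply sum3_abs_le. intros k Hk.
    replace (M ^ 2) with (M * M) by ring. apply Rabs_mult_le; auto.
  - unfold sum3. pose proof (Rabs_pos (DL 0%nat)). pose proof (Rabs_pos (DL 1%nat)).
    pose proof (Rabs_pos (DL 2%nat)). destruct j as [|[|[|j]]]; try lia; lra.
Qed.

Lemma K_coef_bounds : Rabs (K / (1 + K)) <= 1 / 4 /\ Rabs ((1 - K) / (1 + K)) <= 1.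
Proof.
  assert (E1 : K / (1 + K) * (1 + K) = K) by (field; lra).
  assert (E2 : (1 - K) / (1 + K) * (1 + K) = 1 - K) by (field; lra).
  split; apply Rabs_le; split; nra.
Qed.

Lemma rem_ta_bound i j : (i < 3)%nat -> (j < 3)%nat ->
  Rabs (rem_ta K V DV DL i j) <= 7 * M ^ 2 + M * l.
Proof.
  intros Hi Hj.
  pose proof bound_ge0 as HM. destruct vsq_bounds as [[Hw0 Hw1] _].
  destruct Qcoef_bounds as [HQ0 HQ1]. destruct (dvsq_bounds i Hi) as [Hw' _].
  pose proof (Qcoef_d_bound i Hi) as HQ'. destruct K_coef_bounds as [Hc1 Hc2].
  destruct (sum_bounds i j Hi Hj) as [HD [HS [HU [HT HLj]]]].
  assert (HQ : Rabs (1 - Qcoef K w) <= 1) by (apply Rabs_le; lra).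
  assert (HVj : Rabs (V j) <= 1 / 10) by auto. assert (Ha : Rabs (DV i j) <= M) by auto.
  assert (Hl : 0 <= l) by (eapply Rle_trans; [apply Rabs_pos | exact HLj]).
  unfold rem_ta. fold w.
  set (w' := sum3 (fun k => 2 * V k * DV i k)) in *.
  set (Q' := Qcoef_d K w w') in *.
  generalize (K / (1 + K)) ((1 - K) / (1 + K)) (1 - Qcoef K w) (DL j) (V j) (DV i j)
    (sum3 (fun k => DV k k)) (sum3 (fun k => V k * DL k)) (sum3 (fun k => DV i k * DL k))
    (sum3 (fun k => DV i k * DV k j)) Hc1 Hc2 HQ HLj HVj Ha HD HS HU HT.
  clearbody w' Q'. clear - HM Hl HQ' Hw'.
  intros c1 c2 q Lj Vj a D S U T Hc1 Hc2 Hq HLj HVj Ha HD HS HU HT.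
  rewrite <- (Rabs_Ropp Q') in HQ'.
  replace (c1 * w' * Lj - T - Q' * Vj * D + q * a * D + c2 * (- Q' * Vj * S + q * a * S + q * Vj * U))
    with (c1 * w' * Lj + (- T) + (- Q') * Vj * D + q * a * D
          + c2 * ((- Q') * Vj * S + q * a * S + q * Vj * U)) by ring.
  rewrite <- (Rabs_Ropp T) in HT.
  eapply Rle_trans; [Rabs_bound|].
  assert (0 <= M * l) by nra. nra.
Qed.

Lemma rem_A_bound i j : (i < 3)%nat -> (j < 3)%nat -> Rabs (rem_A K V DV i j) <= M * Vb.
Proof.
  intros Hi Hj.
  pose proof bound_ge0 as HM. destruct vsq_bounds as [[Hw0 Hw1] Hw2].
  destruct Qcoef_bounds as [HQ0 HQ1]. destruct (dvsq_bounds i Hi) as [_ Hw'].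
  pose proof (Qcoef_d_bound i Hi) as HQ'.
  assert (HQ : Rabs (Qcoef K w) <= 1) by (apply Rabs_le; lra).
  assert (Hw : Rabs w <= 3 / 100) by (apply Rabs_le; lra).
  assert (HwV : Rabs w <= 3 / 10 * Vb) by (rewrite Rabs_right; lra).
  assert (HVj : Rabs (V j) <= 1 / 10) by auto. assert (HVbj : Rabs (V j) <= Vb) by auto.
  assert (Ha : Rabs (DV i j) <= M) by auto.
  assert (HVb0 : 0 <= Vb) by (eapply Rle_trans; [apply Rabs_pos | exact HVbj]).
  unfold rem_A. fold w.
  eapply Rle_trans.
  { apply Rabs_plus_le; [apply Rabs_plus_le|].
    - exact (Rabs_mult_le _ _ _ _ (Rabs_mult_le _ _ _ _ HQ' Hw) HVbj).
    - exact (Rabs_mult_le _ _ _ _ (Rabs_mult_le _ _ _ _ HQ Hw') HVj).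
    - exact (Rabs_mult_le _ _ _ _ (Rabs_mult_le _ _ _ _ HQ HwV) Ha). }
  assert (0 <= M * Vb) by nra. nra.
Qed.

Lemma abs_mul_l1_le (a : R) : Rabs a * l <= 3 / 2 * a ^ 2 + 1 / 2 * sum3 (fun k => DL k ^ 2).
Proof.
  unfold l, sum3. rewrite <- (pow2_abs a), <- (pow2_abs (DL 0%nat)), <- (pow2_abs (DL 1%nat)),
    <- (pow2_abs (DL 2%nat)).
  pose proof (pow2_ge_0 (Rabs a - Rabs (DL 0%nat))). pose proof (pow2_ge_0 (Rabs a - Rabs (DL 1%nat))).
  pose proof (pow2_ge_0 (Rabs a - Rabs (DL 2%nat))). nra.
Qed.

Variables (al ta A W : R).
Hypotheses (Hal : 0 < al) (Hta : 0 <= ta <= W) (HA : Rabs A <= al * W).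

Lemma rem_entry_bound i j : (i < 3)%nat -> (j < 3)%nat ->
  Rabs (DV i j * (ta * rem_ta K V DV DL i j + A * rem_A K V DV i j)) <=
  W * (7 * M ^ 3 + al * M ^ 2 * Vb)
  + W * M * (3 / 2 * DV i j ^ 2 + 1 / 2 * sum3 (fun k => DL k ^ 2)).
Proof.
  intros Hi Hj.
  pose proof bound_ge0 as HM.
  assert (Ha : Rabs (DV i j) <= M) by auto.
  assert (HVb0 : 0 <= Vb) by (eapply Rle_trans; [apply Rabs_pos | apply (HVb 0%nat); lia]).
  assert (Hl : 0 <= l) by (apply sum3_ge0; intros; apply Rabs_pos).
  assert (Hta' : Rabs ta <= W) by (rewrite Rabs_right; lra).
  pose proof (Rabs_mult_le _ _ _ _ Hta' (rem_ta_bound i j Hi Hj)) as H1.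
  pose proof (Rabs_mult_le _ _ _ _ HA (rem_A_bound i j Hi Hj)) as H2.
  pose proof (Rabs_mult_le _ _ _ _ (Rle_refl (Rabs (DV i j))) (Rabs_plus_le _ _ _ _ H1 H2)) as H.
  eapply Rle_trans; [exact H|].
  pose proof (abs_mul_l1_le (DV i j)) as Hamgm. pose proof (Rabs_pos (DV i j)) as Ha0.
  assert (0 <= W) by lra.
  assert (0 <= W * M * (M - Rabs (DV i j)) * (7 * M + al * Vb)) by
    (repeat apply Rmult_le_pos; nra).
  assert (W * M * (Rabs (DV i j) * l) <= W * M * (3 / 2 * DV i j ^ 2 + 1 / 2 * sum3 (fun k => DL k ^ 2)))
    by (apply Rmult_le_compat_l; nra).
  nra.
Qed.

Lemma rem_sum_bound :
  Rabs (sum3 (fun i => sum3 (fun j => DV i j * (ta * rem_ta K V DV DL i j + A * rem_A K V DV i j))))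
  <= W * (63 * M ^ 3 + 9 * al * M ^ 2 * Vb)
     + 3 / 2 * W * M * sum3 (fun i => sum3 (fun j => DV i j ^ 2))
     + 9 / 2 * W * M * sum3 (fun k => DL k ^ 2).
Proof.
  eapply Rle_trans.
  { apply sum3_abs_le. intros i Hi. apply sum3_abs_le. intros j Hj. apply rem_entry_bound; auto. }
  unfold sum3. lra.
Qed.

End PointwiseBounds.

Lemma transport_pointwise_bound (M : R) (DV : nat -> nat -> R) :
  (forall a b, (a < 3)%nat -> (b < 3)%nat -> Rabs (DV a b) <= M) ->
  Rabs (sum3 (fun k => DV k k) * (/ 2 * sum3 (fun i => sum3 (fun j => DV i j ^ 2))))
  <= 3 / 2 * M * sum3 (fun i => sum3 (fun j => DV i j ^ 2)).
Proof.
  intros HDV.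
  assert (HD : Rabs (sum3 (fun k => DV k k)) <= 3 * M)
    by (rewrite <- sum3_const; apply sum3_abs_le; auto).
  assert (Hs : 0 <= sum3 (fun i => sum3 (fun j => DV i j ^ 2)))
    by (apply sum3_ge0; intros; apply sum3_ge0; intros; apply pow2_ge_0).
  rewrite Rabs_mult, (Rabs_right (/ 2 * _)) by lra.
  pose proof (Rabs_pos (sum3 (fun k => DV k k))). nra.
Qed.

Lemma Dvsq_ge0 (v : vfield) t x y z : 0 <= Dvsq v t x y z.
Proof. apply sum3_ge0; intros; apply sum3_ge0; intros; apply pow2_ge_0. Qed.

Lemma DLsq_ge0 (L : field) t x y z : 0 <= DLsq L t x y z.
Proof. apply sum3_ge0; intros; apply pow2_ge_0. Qed.

Lemma dx_sqr_le_Dvsq (v : vfield) i j t x y z : (i < 3)%nat -> (j < 3)%nat ->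
  dx i (v j) t x y z ^ 2 <= Dvsq v t x y z.
Proof.
  intros Hi Hj. eapply Rle_trans; [apply (sqr_le_sum3 (fun j => dx i (v j) t x y z) j Hj)|].
  apply (le_sum3 (fun i => sum3 (fun j => dx i (v j) t x y z ^ 2))); auto.
  intros k Hk. apply sum3_ge0; intros; apply pow2_ge_0.
Qed.

Section SupNorms.
Variables (t0 t1 t : R) (v : vfield).
Hypotheses (Hv : forall k, (k < 3)%nat -> smooth_on t0 t1 (v k) /\ periodic (v k)) (Ht : t0 < t < t1).

Lemma dx_le_Linf_Dv i j x y z : (i < 3)%nat -> (j < 3)%nat ->
  Rabs (dx i (v j) t x y z) <= Linf_Dv v t.
Proof.
  intros Hi Hj.
  assert (Hs : forall k, (k < 3)%nat -> smooth_on t0 t1 (v k)) by (intros; apply Hv; auto).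
  assert (Hp : periodic (fun t x y z => sqrt (Dvsq v t x y z))).
  { apply (periodic_lift1 sqrt), periodic_Dvsq; intros; apply Hv; auto. }
  eapply Rle_trans; [apply Rabs_le_sqrt, (dx_sqr_le_Dvsq v i j t x y z Hi Hj)|].
  apply (sup3_ge (fun x y z => sqrt (Dvsq v t x y z))).
  apply bounded_periodic; [unfold Dvsq; cont3_auto | intros; apply Hp].
Qed.

Lemma Linf_Dv_ge0 : 0 <= Linf_Dv v t.
Proof. eapply Rle_trans; [apply Rabs_pos | apply (dx_le_Linf_Dv 0 0 0 0 0); lia]. Qed.

End SupNorms.

Lemma v_le_Linf_v t0 t1 t (v : vfield) k x y z : t0 < t < t1 ->
  (forall t x y z, t0 < t < t1 -> sqrt (vsq v t x y z) < 1 / 10) -> (k < 3)%nat ->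
  Rabs (v k t x y z) <= Linf_v v t /\ Rabs (v k t x y z) <= 1 / 10.
Proof.
  intros Ht Hsmall Hk.
  assert (H : Rabs (v k t x y z) <= sqrt (vsq v t x y z))
    by (apply Rabs_le_sqrt, (sqr_le_sum3 (fun j => v j t x y z) k Hk)).
  split.
  - eapply Rle_trans; [exact H|]. apply (sup3_ge (fun x y z => sqrt (vsq v t x y z))).
    exists (1 / 10). intros. apply Rlt_le, Hsmall, Ht.
  - eapply Rle_trans; [exact H|]. apply Rlt_le, Hsmall, Ht.
Qed.

Lemma int3_eq_sqr_sqrt (g : R -> R -> R -> R) : cont3 g -> (forall x y z, 0 <= g x y z) ->
  int3 g = sqrt (int3 g) ^ 2.
Proof. intros Hg H. rewrite <- Rsqr_pow2, Rsqr_sqrt; auto. now apply int3_ge0. Qed.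

Lemma time_weight_bounds al K t : 0 < al -> 0 <= K <= 1 / 3 -> 0 < t ->
  let W := (1 + Rpower t (1 - al)) / t in
  0 <= Rpower t (- al) <= W /\ Rabs (al * (1 - 3 * K) / t) <= al * W.
Proof.
  intros Hal HK Ht W.
  assert (EW : W = / t + Rpower t (- al)).
  { unfold W. replace (1 - al) with (1 + - al) by ring.
    rewrite Rpower_plus, Rpower_1 by auto. field. lra. }
  assert (Hta : 0 < Rpower t (- al)) by apply exp_pos.
  assert (Hit : 0 < / t) by (apply Rinv_0_lt_compat; auto).
  split; [lra|]. rewrite Rabs_right, EW.
  - unfold Rdiv. assert (al * (1 - 3 * K) * / t <= al * / t) by (apply Rmult_le_compat_r; nra). nra.
  - unfold Rdiv. apply Rle_ge, Rmult_le_pos; [nra | lra].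
Qed.

Definition perturb_poly : poly4 :=
  (1, (0, 0, 0, 3)%nat) :: (1, (0, 2, 0, 1)%nat) :: (1, (2, 0, 0, 1)%nat) :: (1, (0, 0, 1, 2)%nat) :: nil.

Lemma perturb_poly_lowdeg : lowdeg_ge3 perturb_poly.
Proof. repeat constructor. Qed.

Lemma eval4_perturb_poly a b c d :
  eval4 perturb_poly a b c d = d ^ 3 + b ^ 2 * d + a ^ 2 * d + c * d ^ 2.
Proof. unfold eval4, perturb_poly. simpl. ring. Qed.

Lemma perturbative_arith al ta W M Vb A B : 0 < al -> 0 <= ta <= W -> 0 <= M -> 0 <= Vb ->
  ta * (3 / 2 * M * B ^ 2) + (W * (63 * M ^ 3 + 9 * al * M ^ 2 * Vb) + 3 / 2 * W * M * B ^ 2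
                              + 9 / 2 * W * M * A ^ 2)
  <= (63 + 9 * al) * W * (M ^ 3 + B ^ 2 * M + A ^ 2 * M + Vb * M ^ 2).
Proof.
  intros Hal Hta HM HVb.
  assert (HW : 0 <= W) by lra.
  assert (HB : 0 <= W * M * B ^ 2) by (apply Rmult_le_pos; [apply Rmult_le_pos | apply pow2_ge_0]; lra).
  assert (HA : 0 <= W * M * A ^ 2) by (apply Rmult_le_pos; [apply Rmult_le_pos | apply pow2_ge_0]; lra).
  assert (HM3 : 0 <= W * M ^ 3) by (apply Rmult_le_pos; [lra | apply pow_le; lra]).
  assert (HV : 0 <= W * (Vb * M ^ 2)) by (apply Rmult_le_pos; [lra | apply Rmult_le_pos; [lra | apply pow2_ge_0]]).
  assert (ta * (3 / 2 * M * B ^ 2) <= W * (3 / 2 * M * B ^ 2))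
    by (apply Rmult_le_compat_r; [apply Rmult_le_pos; [lra | apply pow2_ge_0] | lra]).
  assert (0 <= al * (W * M * B ^ 2)) by (apply Rmult_le_pos; lra).
  assert (0 <= al * (W * M * A ^ 2)) by (apply Rmult_le_pos; lra).
  assert (0 <= al * (W * M ^ 3)) by (apply Rmult_le_pos; lra).
  nra.
Qed.

Section MainEstimate.
Variables (al K t0 t1 : R) (v : vfield) (L : field).
Hypotheses (Hal : 0 < al) (HK : 0 <= K <= 1 / 3) (Ht0 : 0 < t0)
  (Hv : forall k, (k < 3)%nat -> smooth_on t0 t1 (v k) /\ periodic (v k))
  (HL : smooth_on t0 t1 L) (Hsol : is_solution al K t0 t1 v L)
  (Hsmall : forall t x y z, t0 < t < t1 -> sqrt (vsq v t x y z) < 1 / 10).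

Let Hs : forall k, (k < 3)%nat -> smooth_on t0 t1 (v k).
Proof. intros; apply Hv; auto. Qed.

Ltac cont3_solve :=
  unfold DDL_term, Ddiv_term, vDDL_term, transport_term, rem_term, Qfield, rem_ta, rem_A,
    Qcoef, Qcoef_d, Dvsq, DLsq, vsq;
  cont3_auto;
  try apply pow_nonzero; apply (Qcoef_denom_neq0 v _ _ _ _ K HK); apply Hsmall; assumption.

Lemma energy_error_eq t : t0 < t < t1 ->
  / 2 * int3 (dt_Dvsq v t) - rhs_terms al K v L t =
  Rpower t (- al) * int3 (fun x y z => sum3 (fun k => dx k (v k) t x y z) * (/ 2 * Dvsq v t x y z))
  + int3 (rem_term al K v L t).
Proof.
  intros Ht.
  rewrite rhs_terms_eq, <- int3_scal by (unfold dt_Dvsq; cont3_solve).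
  rewrite (int3_ext _ _ (fun x y z => dt_Dvsq_eq al K v L t0 t1 t x y z HK Hs HL Hsol Hsmall Ht)).
  repeat ((rewrite int3_plus by cont3_solve) || (rewrite int3_minus by cont3_solve)).
  rewrite !int3_scal by cont3_solve.
  rewrite (int3_transport t0 t1 v Hs t) by (auto; intros; apply Hv; auto).
  ring.
Qed.

Section FixedTime.
Variable t : R.
Hypothesis Ht : t0 < t < t1.

Let W := (1 + Rpower t (1 - al)) / t.
Let M := Linf_Dv v t.
Let Vb := Linf_v v t.

Lemma Dv_le_M x y z a b : (a < 3)%nat -> (b < 3)%nat -> Rabs (dx a (v b) t x y z) <= M.
Proof. intros; now apply (dx_le_Linf_Dv t0 t1). Qed.

Lemma v_le_Vb x y z k : (k < 3)%nat -> Rabs (v k t x y z) <= Vb /\ Rabs (v k t x y z) <= 1 / 10.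
Proof. intros; now apply (v_le_Linf_v t0 t1). Qed.

Lemma rem_int_bound :
  Rabs (int3 (rem_term al K v L t)) <=
  W * (63 * M ^ 3 + 9 * al * M ^ 2 * Vb) + 3 / 2 * W * M * L2_Dv v t ^ 2
  + 9 / 2 * W * M * L2_DL L t ^ 2.
Proof.
  destruct (time_weight_bounds al K t Hal HK ltac:(lra)) as [Hta HA].
  unfold L2_Dv, L2_DL. rewrite <- !int3_eq_sqr_sqrt by (cont3_solve || apply Dvsq_ge0 || apply DLsq_ge0).
  replace (W * (63 * M ^ 3 + 9 * al * M ^ 2 * Vb) + 3 / 2 * W * M * int3 (Dvsq v t)
           + 9 / 2 * W * M * int3 (DLsq L t))
    with (int3 (fun x y z => W * (63 * M ^ 3 + 9 * al * M ^ 2 * Vb)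
                + 3 / 2 * W * M * Dvsq v t x y z + 9 / 2 * W * M * DLsq L t x y z))
    by (rewrite !int3_plus, !int3_scal, int3_const by cont3_solve; reflexivity).
  apply int3_abs_le; [cont3_solve | cont3_solve |]. intros x y z.
  apply (rem_sum_bound K M Vb (fun k => v k t x y z) (fun a b => dx a (v b) t x y z)
           (fun k => dx k L t x y z)); auto; intros; try apply v_le_Vb; auto; apply Dv_le_M; auto.
Qed.

Lemma transport_int_bound :
  Rabs (int3 (fun x y z => sum3 (fun k => dx k (v k) t x y z) * (/ 2 * Dvsq v t x y z)))
  <= 3 / 2 * M * L2_Dv v t ^ 2.
Proof.
  unfold L2_Dv. rewrite <- int3_eq_sqr_sqrt, <- int3_scal by (cont3_solve || apply Dvsq_ge0).
  apply int3_abs_le; [cont3_solve | cont3_solve |]. intros x y z.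
  apply (transport_pointwise_bound M (fun a b => dx a (v b) t x y z)). intros; now apply Dv_le_M.
Qed.

Lemma energy_error_bound :
  Rabs (Rpower t (- al) * int3 (fun x y z => sum3 (fun k => dx k (v k) t x y z) * (/ 2 * Dvsq v t x y z))
        + int3 (rem_term al K v L t)) <=
  (63 + 9 * al) * W * eval4 perturb_poly (L2_DL L t) (L2_Dv v t) Vb M.
Proof.
  destruct (time_weight_bounds al K t Hal HK ltac:(lra)) as [Hta _].
  rewrite eval4_perturb_poly.
  eapply Rle_trans; [apply Rabs_plus_le; [|exact rem_int_bound]|].
  - rewrite Rabs_mult, Rabs_right by lra.
    apply Rmult_le_compat_l; [lra | exact transport_int_bound].
  - apply perturbative_arith; [exact Hal | exact Hta | apply (Linf_Dv_ge0 t0 t1); auto |].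
    eapply Rle_trans; [apply Rabs_pos | apply (v_le_Vb 0 0 0 0); lia].
Qed.

End FixedTime.

End MainEstimate.

Theorem lemma4p4 (al K : R) (Hal : 0 < al) (HK : 0 <= K <= 1 / 3) :
  exists (C : R) (p : poly4), lowdeg_ge3 p /\
  forall (t0 t1 : R) (v : vfield) (L : field),
    1 <= t0 -> t0 < t1 ->
    (forall i, (i < 3)%nat -> smooth_on t0 t1 (v i) /\ periodic (v i)) ->
    smooth_on t0 t1 L -> periodic L ->
    (forall t x y z, t0 < t < t1 -> sqrt (vsq v t x y z) < 1 / 10) ->
    is_solution al K t0 t1 v L ->
    exists f : R -> R,
      forall t, t0 < t < t1 ->
        is_derive (energy v) t (rhs_terms al K v L t + f t) /\
        Rabs (f t) <= C * ((1 + Rpower t (1 - al)) / t) *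
          eval4 p (L2_DL L t) (L2_Dv v t) (Linf_v v t) (Linf_Dv v t).
Proof.
  exists (63 + 9 * al), perturb_poly. split; [exact perturb_poly_lowdeg|].
  intros t0 t1 v L Ht0 _ Hv HL _ Hsmall Hsol.
  exists (fun t => / 2 * int3 (dt_Dvsq v t) - rhs_terms al K v L t).
  intros t Ht. split.
  - replace (rhs_terms al K v L t + (/ 2 * int3 (dt_Dvsq v t) - rhs_terms al K v L t))
      with (/ 2 * int3 (dt_Dvsq v t)) by ring.
    apply (is_derive_energy t0 t1); [intros k Hk; apply Hv, Hk | exact Ht].
  - rewrite (energy_error_eq al K t0 t1 v L); auto.
    apply (energy_error_bound al K t0 t1 v L); auto. lra.
Qed.
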